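(* Suppose that $A_1,\dots,A_d$ are continuous functions of bounded variation on $[0,1]$, $f\in C[0,1]$, and $g_1,\dots,g_d\in C([0,1]\times\mathbb{R})$ satisfy a linear growth condition, i.e. there is $c\ge0$ with $|g_i(t,\xi)|\le c(1+|\xi|)$ for all $i$, $t\in[0,1]$, $\xi\in\mathbb{R}$. Then there exists at least one solution $B\in C[0,1]$ of the Stieltjes integral equation $$B(t)=f(t)+\sum_{i=1}^d\int_0^tg_i(s,B(s))\,dA_i(s),\qquad 0\le t\le1.$$ Moreover, this solution is unique if $g_1,\dots,g_d$ in addition satisfy a local Lipschitz condition: for each $p>0$ there is $L_p\ge0$ with $|g_i(t,\xi)-g_i(t,\zeta)|\le L_p|\xi-\zeta|$ for all $i$, $\xi,\zeta\in[-p,p]$, $t\in[0,1]$.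
   Context: The integrals are Riemann--Stieltjes integrals. *)

From Stdlib Require Import Reals Lra.
Open Scope R_scope.

Fixpoint rsum (n : nat) (F : nat -> R) : R :=
  match n with
  | O => 0
  | S m => rsum m F + F m
  end.

Definition is_partition (a b : R) (n : nat) (p : nat -> R) : Prop :=
  p 0%nat = a /\ p n = b /\ (forall k, (k < n)%nat -> p k <= p (S k)).

Definition mesh_lt (n : nat) (p : nat -> R) (delta : R) : Prop :=
  forall k, (k < n)%nat -> p (S k) - p k < delta.

Definition is_tagging (n : nat) (p xi : nat -> R) : Prop :=
  forall k, (k < n)%nat -> p k <= xi k <= p (S k).

Definition RS_sum (h A : R -> R) (n : nat) (p xi : nat -> R) : R :=
  rsum n (fun k => h (xi k) * (A (p (S k)) - A (p k))).

Definition is_RS_integral (h A : R -> R) (a b I : R) : Prop :=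
  forall eps, 0 < eps -> exists delta, 0 < delta /\
    forall n p xi, is_partition a b n p -> mesh_lt n p delta ->
      is_tagging n p xi -> Rabs (RS_sum h A n p xi - I) < eps.

Definition bounded_variation01 (A : R -> R) : Prop :=
  exists M, forall n p, is_partition 0 1 n p ->
    rsum n (fun k => Rabs (A (p (S k)) - A (p k))) <= M.

Definition cont01 (f : R -> R) : Prop :=
  forall t, 0 <= t <= 1 -> forall eps, 0 < eps -> exists delta, 0 < delta /\
    forall s, 0 <= s <= 1 -> Rabs (s - t) < delta -> Rabs (f s - f t) < eps.

Definition cont01R (g : R -> R -> R) : Prop :=
  forall t x, 0 <= t <= 1 -> forall eps, 0 < eps -> exists delta, 0 < delta /\
    forall s z, 0 <= s <= 1 -> Rabs (s - t) < delta -> Rabs (z - x) < delta ->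
      Rabs (g s z - g t x) < eps.

(* B solves  B(t) = f(t) + sum_{i<d} int_0^t g_i(s,B(s)) dA_i(s)  on [0,1]
   (indices i = 0..d-1 stand for 1..d) *)
Definition is_solution (d : nat) (A : nat -> R -> R) (f : R -> R)
  (g : nat -> R -> R -> R) (B : R -> R) : Prop :=
  forall t, 0 <= t <= 1 -> exists I : nat -> R,
    (forall i, (i < d)%nat -> is_RS_integral (fun s => g i s (B s)) (A i) 0 t (I i)) /\
    B t = f t + rsum d I.

(* Existence is proved with Tonelli's delayed approximations: for a step h > 0 the equation
     C(t) = f(t) + sum_i int_0^t g_i(s, C(max 0 (s - h))) dA_i(s)
   is solved by marching forward over [0, h], [h, 2h], ...  Put W(t) = sum_i Var_0^t A_i, which is
   continuous and nondecreasing.  Linear growth of g and a Gronwall argument against dW bound every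
   approximation by (|f|_oo + 1) e^(c W) - 1, and the same growth bound gives
   |C(t) - C(t')| <= |f(t) - f(t')| + c (1 + M) |W(t) - W(t')|, so the family is equicontinuous.
   By Arzela-Ascoli a subsequence converges uniformly as h -> 0, and uniform continuity of g near the
   graph of the limit B passes the equation to the limit.  For uniqueness, two continuous solutions are
   bounded, so the local Lipschitz condition holds along them, and iterating the equation gives
   |B1(t) - B2(t)| <= m (L W(t))^j / j! for every j. *)

From Stdlib Require Import Reals Lra Lia.
From Stdlib Require Import IndefiniteDescription ClassicalEpsilon.
Open Scope R_scope.

Lemma Rabs_cases x : (Rabs x = x /\ 0 <= x) \/ (Rabs x = - x /\ x < 0).
Proof. unfold Rabs; destruct (Rcase_abs x); [right|left]; split; auto; lra. Qed.

Ltac rabs := repeat match goal with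
  | |- context [Rabs ?x] => let E := fresh in
      destruct (Rabs_cases x) as [[E ?]|[E ?]]; rewrite E in *; clear E
  | H0 : context [Rabs ?x] |- _ => let E := fresh in
      destruct (Rabs_cases x) as [[E ?]|[E ?]]; rewrite E in *; clear E
  end; lra.

(** * Finite sums and partitions *)

Lemma rsum_ext n F G : (forall k, (k < n)%nat -> F k = G k) -> rsum n F = rsum n G.
Proof. induction n; simpl; intros H; [reflexivity|].
  rewrite IHn by (intros; apply H; lia). rewrite H by lia. reflexivity. Qed.

Lemma rsum_le n F G : (forall k, (k < n)%nat -> F k <= G k) -> rsum n F <= rsum n G.
Proof. induction n; simpl; intros H; [lra|].
  assert (rsum n F <= rsum n G) by (apply IHn; intros; apply H; lia).
  assert (F n <= G n) by (apply H; lia). lra. Qed.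

Lemma rsum_plus n F G : rsum n (fun k => F k + G k) = rsum n F + rsum n G.
Proof. induction n; simpl; [lra|]. rewrite IHn; lra. Qed.

Lemma rsum_scal n c F : rsum n (fun k => c * F k) = c * rsum n F.
Proof. induction n; simpl; [lra|]. rewrite IHn; lra. Qed.

Lemma rsum_minus n F G : rsum n (fun k => F k - G k) = rsum n F - rsum n G.
Proof. induction n; simpl; [lra|]. rewrite IHn; lra. Qed.

Lemma rsum_abs n F : Rabs (rsum n F) <= rsum n (fun k => Rabs (F k)).
Proof. induction n; simpl. rewrite Rabs_R0; lra.
  eapply Rle_trans; [apply Rabs_triang|]. lra. Qed.

Lemma rsum_nonneg n F : (forall k, (k < n)%nat -> 0 <= F k) -> 0 <= rsum n F.
Proof. intros H. replace 0 with (rsum n (fun _ => 0)).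
  apply rsum_le; auto. induction n; simpl; auto. rewrite IHn; [lra|]. intros; apply H; lia. Qed.

Lemma rsum_zero n : rsum n (fun _ => 0) = 0.
Proof. induction n; simpl; lra. Qed.

Lemma rsum_telescope n a : rsum n (fun k => a (S k) - a k) = a n - a O.
Proof. induction n; simpl; [lra|]. rewrite IHn; lra. Qed.

Lemma rsum_split n m F : rsum (n + m) F = rsum n F + rsum m (fun k => F (n + k)%nat).
Proof. induction m; simpl. rewrite Nat.add_0_r; lra.
  rewrite Nat.add_succ_r; simpl. rewrite IHm; lra. Qed.

Lemma rsum_exchange d n F : rsum d (fun i => rsum n (F i)) = rsum n (fun k => rsum d (fun i => F i k)).
Proof. induction d; simpl. rewrite rsum_zero; auto.
  rewrite IHd. rewrite <- rsum_plus. reflexivity. Qed.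

Lemma Req_of_close x y : (forall e, 0 < e -> Rabs (x - y) <= e) -> x = y.
Proof. intros H. destruct (Req_dec x y); auto.
  assert (0 < Rabs (x - y)) by (apply Rabs_pos_lt; lra).
  specialize (H (Rabs (x - y) / 2) ltac:(lra)). lra. Qed.

Lemma partition_mono a b n p : is_partition a b n p ->
  forall j k, (j <= k)%nat -> (k <= n)%nat -> p j <= p k.
Proof. intros [_ [_ H]] j k Hjk. induction Hjk; intros; [lra|].
  assert (p j <= p m) by (apply IHHjk; lia). assert (p m <= p (S m)) by (apply H; lia). lra. Qed.

Lemma partition_in a b n p : is_partition a b n p -> forall k, (k <= n)%nat -> a <= p k <= b.
Proof. intros Hp k Hk. pose proof Hp as [H0 [Hn _]]. split.
  rewrite <- H0; apply (partition_mono a b n p Hp); lia.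
  rewrite <- Hn; apply (partition_mono a b n p Hp); lia. Qed.

Lemma tagging_in a b n p xi : is_partition a b n p -> is_tagging n p xi ->
  forall k, (k < n)%nat -> a <= xi k <= b.
Proof. intros Hp Ht k Hk. pose proof (partition_in _ _ _ _ Hp k ltac:(lia)).
  pose proof (partition_in _ _ _ _ Hp (S k) ltac:(lia)). specialize (Ht k Hk). lra. Qed.

Lemma tagging_left n p : (forall k, (k < n)%nat -> p k <= p (S k)) -> is_tagging n p p.
Proof. intros H k Hk. specialize (H k Hk). lra. Qed.

Lemma mesh_lt_weaken n p dl dl' : dl' <= dl -> mesh_lt n p dl' -> mesh_lt n p dl.
Proof. intros H Hm k Hk. specialize (Hm k Hk). lra. Qed.

Definition upart (a b : R) (N : nat) : nat -> R := fun k => a + INR k * ((b - a) / INR N).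

Lemma upart_partition a b N : a <= b -> (0 < N)%nat -> is_partition a b N (upart a b N).
Proof. intros Hab HN. unfold upart. assert (0 < INR N) by (apply lt_0_INR; lia).
  split; [simpl; lra|]. split. field; lra.
  intros k _. rewrite S_INR. assert (0 <= (b - a) / INR N) by (apply Rle_mult_inv_pos; lra). lra. Qed.

Lemma upart_mesh a b N dl : (b - a) / INR N < dl -> mesh_lt N (upart a b N) dl.
Proof. intros H k _. unfold upart. rewrite S_INR. lra. Qed.

Lemma upart_step_lt a b dl : 0 < dl -> exists N, (0 < N)%nat /\ (b - a) / INR N < dl.
Proof. intros Hd. destruct (INR_unbounded (Rabs (b - a) / dl)) as [N HN].
  assert (0 <= Rabs (b - a) / dl) by (apply Rle_mult_inv_pos; [apply Rabs_pos|lra]).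
  assert (0 < INR N) by lra. assert (0 < N)%nat by (apply INR_lt; simpl; lra).
  exists N. split; auto.
  assert (Rabs (b - a) < dl * INR N).
  { apply Rmult_lt_reg_r with (/dl). apply Rinv_0_lt_compat; lra.
    replace (dl * INR N * / dl) with (INR N) by (field; lra). unfold Rdiv in HN. lra. }
  assert (b - a <= Rabs (b - a)) by apply RRle_abs.
  apply Rmult_lt_reg_r with (INR N); auto.
  unfold Rdiv. rewrite Rmult_assoc, Rinv_l by lra. lra. Qed.

Definition pcat (n1 : nat) (p1 p2 : nat -> R) : nat -> R :=
  fun k => if (k <=? n1)%nat then p1 k else p2 (k - n1)%nat.

Lemma pcat_partition a b c n1 n2 p1 p2 : is_partition a b n1 p1 -> is_partition b c n2 p2 ->
  is_partition a c (n1 + n2) (pcat n1 p1 p2).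
Proof. intros [H10 [H1n H1m]] [H20 [H2n H2m]]. unfold pcat. split; [|split].
  - simpl. auto.
  - destruct (Nat.leb_spec (n1 + n2) n1).
    + assert (n2 = 0)%nat as E by lia. rewrite E in *. rewrite Nat.add_0_r, H1n, <- H20; auto.
    + replace (n1 + n2 - n1)%nat with n2 by lia. auto.
  - intros k Hk. destruct (Nat.leb_spec k n1); destruct (Nat.leb_spec (S k) n1).
    + apply H1m; lia.
    + assert (k = n1) as E by lia. rewrite E. replace (S n1 - n1)%nat with 1%nat by lia.
      rewrite H1n, <- H20. apply H2m; lia.
    + lia.
    + replace (S k - n1)%nat with (S (k - n1)) by lia. apply H2m; lia. Qed.

Lemma rsum_pcat n1 n2 p1 p2 (F : R -> R -> R) : p1 n1 = p2 O ->
  rsum (n1 + n2) (fun k => F (pcat n1 p1 p2 (S k)) (pcat n1 p1 p2 k)) =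
  rsum n1 (fun k => F (p1 (S k)) (p1 k)) + rsum n2 (fun k => F (p2 (S k)) (p2 k)).
Proof. intros Hj. rewrite rsum_split. unfold pcat. f_equal.
  - apply rsum_ext. intros k Hk. destruct (Nat.leb_spec (S k) n1); [|lia].
    destruct (Nat.leb_spec k n1); [auto|lia].
  - apply rsum_ext. intros k Hk. destruct (Nat.leb_spec (S (n1 + k)) n1); [lia|].
    replace (S (n1 + k) - n1)%nat with (S k) by lia.
    destruct (Nat.leb_spec (n1 + k) n1).
    + assert (k = 0)%nat by lia. subst. rewrite Nat.add_0_r. rewrite Hj. auto.
    + replace (n1 + k - n1)%nat with k by lia. auto. Qed.

Lemma pcat_mesh n1 n2 p1 p2 dl : p1 n1 = p2 O -> mesh_lt n1 p1 dl -> mesh_lt n2 p2 dl ->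
  mesh_lt (n1 + n2) (pcat n1 p1 p2) dl.
Proof. intros Hj H1 H2 k Hk. unfold pcat.
  destruct (Nat.leb_spec (S k) n1); destruct (Nat.leb_spec k n1); try lia.
  - apply H1; lia.
  - assert (k = n1) by lia. subst. replace (S n1 - n1)%nat with 1%nat by lia.
    rewrite Hj. apply H2; lia.
  - replace (S k - n1)%nat with (S (k - n1)) by lia. apply H2; lia. Qed.

(** * Riemann-Stieltjes integrals *)

Definition var_sum (A : R -> R) n (p : nat -> R) := rsum n (fun k => Rabs (A (p (S k)) - A (p k))).
Definition var_bounded (A : R -> R) a b Vb := forall n p, is_partition a b n p -> var_sum A n p <= Vb.
Definition unif_cont a b (h : R -> R) := forall e, 0 < e -> exists dl, 0 < dl /\
  forall u v, a <= u <= b -> a <= v <= b -> Rabs (u - v) < dl -> Rabs (h u - h v) < e.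

Lemma var_sum_nonneg A n p : 0 <= var_sum A n p.
Proof. apply rsum_nonneg. intros; apply Rabs_pos. Qed.

Lemma fine_upart a b dl : a <= b -> 0 < dl -> exists N, (0 < N)%nat /\ is_partition a b N (upart a b N) /\
  mesh_lt N (upart a b N) dl /\ is_tagging N (upart a b N) (upart a b N).
Proof. intros Hab Hd. destruct (upart_step_lt a b dl Hd) as [N [HN Hm]]. exists N.
  pose proof (upart_partition a b N Hab HN) as Hp. split; auto. split; auto. split. apply upart_mesh; auto.
  apply tagging_left. apply Hp. Qed.

Lemma RS_integral_pair h1 A1 I1 h2 A2 I2 a b e :
  is_RS_integral h1 A1 a b I1 -> is_RS_integral h2 A2 a b I2 -> 0 < e ->
  exists dl, 0 < dl /\ forall n p xi, is_partition a b n p -> mesh_lt n p dl -> is_tagging n p xi ->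
    Rabs (RS_sum h1 A1 n p xi - I1) < e /\ Rabs (RS_sum h2 A2 n p xi - I2) < e.
Proof. intros H1 H2 He. destruct (H1 e He) as [d1 [Hd1 H1']]. destruct (H2 e He) as [d2 [Hd2 H2']].
  exists (Rmin d1 d2). split; [apply Rmin_pos; auto|]. intros n p xi Hp Hm Ht.
  split; [apply H1'|apply H2']; auto; apply (mesh_lt_weaken n p _ (Rmin d1 d2)); auto.
  apply Rmin_l. apply Rmin_r. Qed.

Lemma RS_integral_unique h A a b I1 I2 : a <= b -> is_RS_integral h A a b I1 ->
  is_RS_integral h A a b I2 -> I1 = I2.
Proof. intros Hab H1 H2. apply Req_of_close. intros e He.
  destruct (RS_integral_pair h A I1 h A I2 a b (e/2) H1 H2) as [dl [Hdl Hd]]; [lra|].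
  destruct (fine_upart a b dl Hab Hdl) as [N [_ [Hp [Hm Ht]]]].
  destruct (Hd _ _ _ Hp Hm Ht). rabs. Qed.

Lemma RS_integral_ext h1 h2 A a b I : (forall s, a <= s <= b -> h1 s = h2 s) ->
  is_RS_integral h1 A a b I -> is_RS_integral h2 A a b I.
Proof. intros He H e Hep. destruct (H e Hep) as [dl [Hd H']]. exists dl. split; auto.
  intros n p xi Hp Hm Ht. specialize (H' n p xi Hp Hm Ht). unfold RS_sum in *.
  erewrite rsum_ext. apply H'. intros k Hk. simpl. rewrite He; auto.
  apply (tagging_in a b n p xi Hp Ht k Hk). Qed.

Lemma RS_integral_plus h1 h2 A a b I1 I2 : is_RS_integral h1 A a b I1 -> is_RS_integral h2 A a b I2 ->
  is_RS_integral (fun s => h1 s + h2 s) A a b (I1 + I2).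
Proof. intros H1 H2 e He.
  destruct (RS_integral_pair h1 A I1 h2 A I2 a b (e/2) H1 H2) as [dl [Hdl Hd]]; [lra|].
  exists dl. split; auto. intros n p xi Hp Hm Ht. destruct (Hd _ _ _ Hp Hm Ht). unfold RS_sum in *.
  rewrite (rsum_ext n _ (fun k => h1 (xi k) * (A (p (S k)) - A (p k)) + h2 (xi k) * (A (p (S k)) - A (p k))))
    by (intros; ring).
  rewrite rsum_plus. rabs. Qed.

Lemma RS_sum_scal c h A n p xi : RS_sum (fun s => c * h s) A n p xi = c * RS_sum h A n p xi.
Proof. unfold RS_sum. rewrite <- rsum_scal. apply rsum_ext. intros; ring. Qed.

Lemma RS_integral_scal h A a b c I : is_RS_integral h A a b I ->
  is_RS_integral (fun s => c * h s) A a b (c * I).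
Proof. intros H e He. pose proof (Rabs_pos c).
  destruct (H (e / (Rabs c + 1))) as [dl [Hd H']]; [apply Rdiv_lt_0_compat; lra|].
  exists dl; split; auto. intros n p xi Hp Hm Ht. specialize (H' _ _ _ Hp Hm Ht).
  rewrite RS_sum_scal, <- Rmult_minus_distr_l, Rabs_mult.
  pose proof (Rabs_pos (RS_sum h A n p xi - I)).
  replace e with (e / (Rabs c + 1) * (Rabs c + 1)) by (field; lra). nra. Qed.

Lemma RS_sum_abs_le phi psi A a b n p xi : is_partition a b n p -> is_tagging n p xi ->
  (forall s, a <= s <= b -> Rabs (phi s) <= psi s) ->
  Rabs (RS_sum phi A n p xi) <= rsum n (fun k => psi (xi k) * Rabs (A (p (S k)) - A (p k))).
Proof. intros Hp Ht Hphi. unfold RS_sum. eapply Rle_trans; [apply rsum_abs|]. apply rsum_le. intros k Hk.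
  rewrite Rabs_mult. apply Rmult_le_compat_r; [apply Rabs_pos|].
  apply Hphi, (tagging_in a b n p xi Hp Ht k Hk). Qed.

Lemma RS_integral_const c A a b : is_RS_integral (fun _ => c) A a b (c * (A b - A a)).
Proof. intros e He. exists 1. split; [lra|]. intros n p xi [H0 [Hn _]] _ _. unfold RS_sum.
  rewrite rsum_scal, (rsum_telescope n (fun k => A (p k))). simpl. rewrite Hn, H0.
  replace (c * (A b - A a) - c * (A b - A a)) with 0 by ring. rewrite Rabs_R0. auto. Qed.

Definition heaviside (x s : R) : R := if Rle_dec x s then 1 else 0.

Lemma RS_integral_heaviside a b x A : a <= x <= b -> unif_cont a b A ->
  is_RS_integral (heaviside x) A a b (A b - A x).
Proof. intros Hx HA e He. destruct (HA (e/3) ltac:(lra)) as [dl [Hd HA']]. exists dl. split; auto.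
  intros n p xi Hp Hm Ht.
  assert (forall m, (m <= n)%nat -> (p m < x -> RS_sum (heaviside x) A m p xi = 0) /\
     (x <= p m -> Rabs (RS_sum (heaviside x) A m p xi - (A (p m) - A x)) <= 2 * (e/3))).
  { induction m; intros Hmn; unfold RS_sum in *; simpl.
    - destruct Hp as [H0 _]. split; intros; auto. replace (A (p O)) with (A x) by (f_equal; lra).
      replace (0 - (A x - A x)) with 0 by ring. rewrite Rabs_R0; lra.
    - specialize (IHm ltac:(lia)). destruct IHm as [IH1 IH2].
      pose proof (partition_in _ _ _ _ Hp m ltac:(lia)). pose proof (partition_in _ _ _ _ Hp (S m) ltac:(lia)).
      pose proof (Ht m ltac:(lia)). pose proof (Hm m ltac:(lia)). destruct Hp as [_ [_ Hmono]].
      pose proof (Hmono m ltac:(lia)). unfold heaviside in *. split; intros.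
      + rewrite IH1 by lra. destruct (Rle_dec x (xi m)); [lra|]. ring.
      + destruct (Rle_dec x (p m)).
        * destruct (Rle_dec x (xi m)); [|lra]. specialize (IH2 r).
          replace (rsum m (fun k => (if Rle_dec x (xi k) then 1 else 0) * (A (p (S k)) - A (p k))) +
             1 * (A (p (S m)) - A (p m)) - (A (p (S m)) - A x)) with
             (rsum m (fun k => (if Rle_dec x (xi k) then 1 else 0) * (A (p (S k)) - A (p k))) - (A (p m) - A x)) by ring.
          exact IH2.
        * rewrite IH1 by lra.
          assert (Rabs (A (p (S m)) - A (p m)) < e/3) by (apply HA'; try lra; rabs).
          assert (Rabs (A (p (S m)) - A x) < e/3) by (apply HA'; try lra; rabs).
          destruct (Rle_dec x (xi m)); rabs. }
  destruct (H n (le_n n)) as [_ H2]. pose proof Hp as [_ [Hn _]]. rewrite Hn in H2.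
  specialize (H2 ltac:(lra)). lra. Qed.

Lemma RS_sum_sub_le h1 h2 A a b n p xi e : is_partition a b n p -> is_tagging n p xi ->
  (forall s, a <= s <= b -> Rabs (h1 s - h2 s) <= e) ->
  Rabs (RS_sum h1 A n p xi - RS_sum h2 A n p xi) <= e * var_sum A n p.
Proof. intros Hp Ht He. unfold RS_sum, var_sum. rewrite <- rsum_minus, <- rsum_scal.
  eapply Rle_trans; [apply rsum_abs|]. apply rsum_le. intros k Hk.
  rewrite <- Rmult_minus_distr_r, Rabs_mult. apply Rmult_le_compat_r. apply Rabs_pos.
  apply He. apply (tagging_in a b n p xi Hp Ht k Hk). Qed.

Lemma var_bounded_nonneg A a b Vb : a <= b -> var_bounded A a b Vb -> 0 <= Vb.
Proof. intros Hab H. destruct (fine_upart a b 1 Hab ltac:(lra)) as [N [_ [Hp _]]].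
  specialize (H _ _ Hp). eapply Rle_trans; [|apply H]. apply var_sum_nonneg. Qed.

Definition inv_succ (n : nat) := / (INR n + 1).

Lemma inv_succ_pos n : 0 < inv_succ n.
Proof. unfold inv_succ. apply Rinv_0_lt_compat. pose proof (pos_INR n); lra. Qed.

Lemma inv_succ_lt e : 0 < e -> exists N, forall n, (N <= n)%nat -> inv_succ n < e.
Proof. intros He. destruct (INR_unbounded (/ e)) as [N HN]. exists N. intros n Hn.
  unfold inv_succ. apply le_INR in Hn. assert (0 < /e) by (apply Rinv_0_lt_compat; auto).
  replace e with (/ / e) by (field; lra). apply Rinv_lt_contravar. nra. lra. Qed.

Lemma RS_integral_dist_le h1 h2 A a b Vb I1 I2 e : a <= b -> var_bounded A a b Vb ->
  is_RS_integral h1 A a b I1 -> is_RS_integral h2 A a b I2 ->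
  (forall s, a <= s <= b -> Rabs (h1 s - h2 s) <= e) -> Rabs (I1 - I2) <= e * Vb.
Proof. intros Hab HV H1 H2 He. apply Rle_plus_epsilon. intros eps Heps.
  assert (He0 : 0 <= e) by (pose proof (He a ltac:(lra)); pose proof (Rabs_pos (h1 a - h2 a)); lra).
  destruct (RS_integral_pair h1 A I1 h2 A I2 a b (eps/2) H1 H2) as [dl [Hdl Hd]]; [lra|].
  destruct (fine_upart a b dl Hab Hdl) as [N [_ [Hp [Hm Ht]]]].
  destruct (Hd _ _ _ Hp Hm Ht).
  pose proof (RS_sum_sub_le h1 h2 A a b N _ _ e Hp Ht He).
  assert (e * var_sum A N (upart a b N) <= e * Vb) by (apply Rmult_le_compat_l; auto).
  rabs. Qed.

Lemma RS_integral_uniform_limit h A a b Vb : a <= b -> var_bounded A a b Vb ->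
  (forall e, 0 < e -> exists h' I', is_RS_integral h' A a b I' /\
      forall s, a <= s <= b -> Rabs (h s - h' s) <= e) ->
  exists I, is_RS_integral h A a b I.
Proof. intros Hab HV Happ. pose proof (var_bounded_nonneg A a b Vb Hab HV) as HV0.
  destruct (functional_choice (fun n (hI : (R -> R) * R) => is_RS_integral (fst hI) A a b (snd hI) /\
      forall s, a <= s <= b -> Rabs (h s - fst hI s) <= inv_succ n)) as [hI HhI].
  { intros n. destruct (Happ (inv_succ n) (inv_succ_pos n)) as [h' [I' HI']]. exists (h', I'). exact HI'. }
  set (u n := snd (hI n)).
  assert (Hdist : forall n m, Rabs (u n - u m) <= (inv_succ n + inv_succ m) * Vb).
  { intros n m. destruct (HhI n) as [Hn Hn']. destruct (HhI m) as [Hm Hm'].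
    apply (RS_integral_dist_le (fst (hI n)) (fst (hI m)) A a b); auto.
    intros s Hs. specialize (Hn' s Hs). specialize (Hm' s Hs). rabs. }
  assert (Hcv : Cauchy_crit u).
  { intros e He. destruct (inv_succ_lt (e / (2 * Vb + 1))) as [N HN]; [apply Rdiv_lt_0_compat; lra|].
    exists N. intros n m Hn Hm. unfold R_dist. eapply Rle_lt_trans; [apply Hdist|].
    pose proof (HN n Hn). pose proof (HN m Hm). pose proof (inv_succ_pos n). pose proof (inv_succ_pos m).
    replace e with (e / (2 * Vb + 1) * (2 * Vb + 1)) by (field; lra). nra. }
  destruct (R_complete u Hcv) as [l Hl]. exists l. intros e He.
  destruct (inv_succ_lt (e / (3 * Vb + 3))) as [N1 HN1]; [apply Rdiv_lt_0_compat; lra|].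
  destruct (Hl (e/3)) as [N2 HN2]; [lra|].
  set (N := (N1 + N2)%nat). specialize (HN1 N ltac:(lia)). specialize (HN2 N ltac:(lia)).
  unfold R_dist in HN2. pose proof (inv_succ_pos N).
  destruct (HhI N) as [HI HI']. destruct (HI (e/3)) as [dl [Hdl Hd]]; [lra|].
  exists dl. split; auto. intros n p xi Hp Hm Ht. specialize (Hd _ _ _ Hp Hm Ht).
  pose proof (RS_sum_sub_le h (fst (hI N)) A a b n p xi (inv_succ N) Hp Ht HI').
  assert (inv_succ N * var_sum A n p <= e / 3).
  { pose proof (var_sum_nonneg A n p). pose proof (HV n p Hp).
    replace (e / 3) with (e / (3 * Vb + 3) * (Vb + 1)) by (field; lra). nra. }
  fold (u N) in Hd. rabs. Qed.

(* A uniformly continuous integrand is a uniform limit of step functions, i.e. of combinations of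
   Heaviside jumps, whose integrals are explicit. *)
Fixpoint step_interp (h : R -> R) (x : nat -> R) (m : nat) : R -> R :=
  match m with
  | O => fun _ => h (x O)
  | S m' => fun s => step_interp h x m' s + (h (x m) - h (x m')) * heaviside (x m) s
  end.

Lemma step_interp_integral h A a b N x : is_partition a b N x -> unif_cont a b A ->
  forall m, (m <= N)%nat -> exists I, is_RS_integral (step_interp h x m) A a b I.
Proof. intros Hp HA. induction m; intros Hmn.
  - eexists. apply RS_integral_const.
  - destruct (IHm ltac:(lia)) as [I HI]. eexists. simpl.
    apply (RS_integral_plus (step_interp h x m) (fun s => (h (x (S m)) - h (x m)) * heaviside (x (S m)) s)).
    exact HI. apply RS_integral_scal. apply RS_integral_heaviside; auto.
    apply (partition_in a b N x Hp); lia. Qed.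

Lemma step_interp_value h a b N x s : is_partition a b N x -> a <= s ->
  forall m, (m <= N)%nat -> exists i, (i <= m)%nat /\ x i <= s /\
     (i = m \/ s < x (S i)) /\ step_interp h x m s = h (x i).
Proof. intros Hp Hs0 m. induction m; intros Hmn.
  - exists O. split; [lia|]. split. destruct Hp as [H0 _]. lra. split; auto.
  - destruct (IHm ltac:(lia)) as [i [Hi [Hxi [Hor Hg]]]]. simpl. rewrite Hg. unfold heaviside.
    destruct (Rle_dec (x (S m)) s).
    + assert (i = m).
      { destruct Hor as [|Hlt]; auto. destruct (Nat.eq_dec i m); auto.
        assert (x (S i) <= x (S m)) by (apply (partition_mono a b N x Hp); lia). lra. }
      subst i. exists (S m). split; [lia|]. split; auto. split; auto. ring.
    + exists i. split; [lia|]. split; auto. split. destruct Hor as [->|]; auto. lra. ring. Qed.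

Lemma RS_integral_exists h A a b Vb : a <= b -> unif_cont a b h -> unif_cont a b A -> var_bounded A a b Vb ->
  exists I, is_RS_integral h A a b I.
Proof. intros Hab Hh HA HV. apply (RS_integral_uniform_limit h A a b Vb Hab HV). intros e He.
  destruct (Hh e He) as [dl [Hd Hh']]. destruct (fine_upart a b dl Hab Hd) as [N [_ [Hp [Hmesh _]]]].
  set (x := upart a b N) in *.
  destruct (step_interp_integral h A a b N x Hp HA N (le_n N)) as [I HI].
  exists (step_interp h x N), I. split; auto.
  intros s Hs. destruct (step_interp_value h a b N x s Hp (proj1 Hs) N (le_n N)) as [i [Hi [Hxi [Hor Hg]]]].
  rewrite Hg. left. pose proof (partition_in a b N x Hp i Hi). apply Hh'; auto.
  destruct (Nat.eq_dec i N) as [->|Hne].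
  - destruct Hp as [_ [Hn _]]. rewrite Hn in *. rabs.
  - destruct Hor as [|Hlt]; [lia|]. pose proof (Hmesh i ltac:(lia)). rabs.
Qed.

(** * Compactness of [0, 1] *)

Lemma ValAdh_close u l : ValAdh u l -> forall e, 0 < e ->
  forall N, exists p, (N <= p)%nat /\ Rabs (u p - l) < e.
Proof. intros H e He N. destruct (H (disc l (mkposreal e He)) N) as [p [Hp Hv]].
  exists (mkposreal e He). intros y Hy. exact Hy. exists p. split; auto. Qed.

Lemma cluster_point01 (u : nat -> R) : (forall n, 0 <= u n <= 1) ->
  exists l, 0 <= l <= 1 /\ forall e, 0 < e -> forall N, exists p, (N <= p)%nat /\ Rabs (u p - l) < e.
Proof. intros Hu. destruct (Bolzano_Weierstrass u (fun c => 0 <= c <= 1) (compact_P3 0 1) Hu) as [l Hl].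
  pose proof (ValAdh_close u l Hl) as H. exists l. split; auto.
  split; apply Rnot_lt_le; intros Hlt.
  - destruct (H (- l) ltac:(lra) O) as [p [_ Hp]]. specialize (Hu p). rabs.
  - destruct (H (l - 1) ltac:(lra) O) as [p [_ Hp]]. specialize (Hu p). rabs. Qed.

Lemma lebesgue_number (dt : R -> R) : (forall t, 0 <= t <= 1 -> 0 < dt t) ->
  exists dl, 0 < dl /\ forall s, 0 <= s <= 1 -> exists t, 0 <= t <= 1 /\ Rabs (s - t) + dl <= dt t.
Proof. intros Hdt. apply NNPP. intros Hn.
  assert (Hs : forall n, exists s, 0 <= s <= 1 /\ forall t, 0 <= t <= 1 -> dt t < Rabs (s - t) + inv_succ n).
  { intros n. apply NNPP. intros Hn2. apply Hn. exists (inv_succ n). split. apply inv_succ_pos.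
    intros s Hs1. apply NNPP. intros Hs2. apply Hn2. exists s. split; auto.
    intros t Ht. apply Rnot_le_lt. intros Hle. apply Hs2. exists t. auto. }
  destruct (functional_choice _ Hs) as [u Hu].
  destruct (cluster_point01 u) as [l [Hl Hcl]]. intros n; apply (Hu n).
  pose proof (Hdt l Hl) as Hd. destruct (inv_succ_lt (dt l / 2) ltac:(lra)) as [N HN].
  destruct (Hcl (dt l / 2) ltac:(lra) N) as [p [Hp Hup]]. specialize (HN p Hp).
  destruct (Hu p) as [_ Hu2]. specialize (Hu2 l Hl). lra. Qed.

Lemma cont01_unif f : cont01 f -> unif_cont 0 1 f.
Proof. intros Hf e He.
  assert (H : forall t, exists d, 0 < d /\
     (0 <= t <= 1 -> forall s, 0 <= s <= 1 -> Rabs (s - t) < d -> Rabs (f s - f t) < e / 2)).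
  { intros t. destruct (classic (0 <= t <= 1)) as [Ht|Ht].
    - destruct (Hf t Ht (e/2) ltac:(lra)) as [d [Hd H]]. exists d. auto.
    - exists 1. split; [lra|]. tauto. }
  destruct (functional_choice _ H) as [dt Hdt].
  destruct (lebesgue_number dt) as [dl [Hdl Hleb]]. intros t Ht; apply Hdt.
  exists dl. split; auto. intros u v Hu Hv Huv. destruct (Hleb u Hu) as [t [Ht Htd]].
  destruct (Hdt t) as [_ H2]. assert (Rabs (u - t) < dt t) by lra.
  assert (Rabs (v - t) < dt t) by rabs.
  specialize (H2 Ht u Hu H0). pose proof (proj2 (Hdt t) Ht v Hv H1). rabs. Qed.

Lemma unif_cont_sub a b f : 0 <= a -> b <= 1 -> unif_cont 0 1 f -> unif_cont a b f.
Proof. intros Ha Hb H e He. destruct (H e He) as [d [Hd H']]. exists d. split; auto.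
  intros u v Hu Hv. apply H'; lra. Qed.

Lemma cont01_bounded f : cont01 f -> exists M, forall t, 0 <= t <= 1 -> Rabs (f t) <= M.
Proof. intros Hf. destruct (cont01_unif f Hf 1 ltac:(lra)) as [d [Hd H]].
  assert (Hk : forall k, forall t, 0 <= t <= 1 -> t <= INR k * (d / 2) -> Rabs (f t) <= Rabs (f 0) + INR k).
  { induction k; intros t Ht Htk.
    - simpl in Htk. replace t with 0 by lra. simpl. lra.
    - rewrite S_INR in *. destruct (Rle_dec t (INR k * (d / 2))).
      + specialize (IHk t Ht r). lra.
      + set (t' := Rmax 0 (t - d / 2)).
        assert (0 <= t' <= 1 /\ t' <= INR k * (d/2) /\ Rabs (t - t') < d).
        { unfold t', Rmax. pose proof (pos_INR k).
          assert (0 <= INR k * (d/2)) by (apply Rmult_le_pos; lra).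
          destruct (Rle_dec 0 (t - d/2)); split; try split; try lra; rabs. }
        destruct H0 as [H1 [H2 H3]]. specialize (IHk t' H1 H2).
        specialize (H t t' Ht H1 H3). rabs. }
  destruct (INR_unbounded (2 / d)) as [k Hk2]. exists (Rabs (f 0) + INR k).
  intros t Ht. apply Hk; auto. assert (INR k * (d / 2) > 1).
  { apply Rmult_lt_reg_r with (2 / d). apply Rdiv_lt_0_compat; lra.
    replace (INR k * (d / 2) * (2 / d)) with (INR k) by (field; lra). lra. }
  lra. Qed.

Lemma cont01_comp g B : cont01R g -> cont01 B -> cont01 (fun s => g s (B s)).
Proof. intros Hg HB t Ht e He. destruct (Hg t (B t) Ht e He) as [dg [Hdg Hg']].
  destruct (HB t Ht dg Hdg) as [dB [HdB HB']]. exists (Rmin dg dB). split. apply Rmin_glb_lt; auto.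
  intros s Hs Hst. pose proof (Rmin_l dg dB). pose proof (Rmin_r dg dB). apply Hg'; auto. lra.
  apply HB'; auto. lra. Qed.

Lemma cont01_delay C h : 0 <= h -> cont01 C -> cont01 (fun s => C (Rmax 0 (s - h))).
Proof. intros Hh HC t Ht e He. assert (Hm : 0 <= Rmax 0 (t - h) <= 1) by (unfold Rmax; destruct Rle_dec; lra).
  destruct (HC _ Hm e He) as [d [Hd H]]. exists d. split; auto. intros s Hs Hst. apply H.
  unfold Rmax; destruct Rle_dec; lra. unfold Rmax; destruct Rle_dec; destruct Rle_dec; rabs. Qed.

Lemma cont01R_unif_graph g B : cont01R g -> cont01 B -> forall e, 0 < e -> exists eta, 0 < eta /\
  forall s z, 0 <= s <= 1 -> Rabs (z - B s) < eta -> Rabs (g s z - g s (B s)) < e.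
Proof. intros Hg HB e He.
  assert (H : forall t, exists d, 0 < d /\ (0 <= t <= 1 -> forall s z, 0 <= s <= 1 -> Rabs (s - t) < d ->
     Rabs (z - B s) < d -> Rabs (g s z - g t (B t)) < e / 2 /\ Rabs (g s (B s) - g t (B t)) < e / 2)).
  { intros t. destruct (classic (0 <= t <= 1)) as [Ht|Ht]; [|exists 1; split; [lra|tauto]].
    destruct (Hg t (B t) Ht (e/2) ltac:(lra)) as [dg [Hdg Hg']].
    destruct (HB t Ht (dg/2) ltac:(lra)) as [dB [HdB HB']].
    exists (Rmin dB (dg/2)). split. apply Rmin_glb_lt; lra. intros _ s z Hs Hst Hz.
    pose proof (Rmin_l dB (dg/2)). pose proof (Rmin_r dB (dg/2)).
    assert (Rabs (B s - B t) < dg / 2) by (apply HB'; auto; lra).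
    split; apply Hg'; auto; try lra; rabs. }
  destruct (functional_choice _ H) as [dt Hdt]. destruct (lebesgue_number dt) as [dl [Hdl Hleb]].
  intros t Ht; apply Hdt.
  exists dl. split; auto. intros s z Hs Hz. destruct (Hleb s Hs) as [t [Ht Htd]].
  destruct (Hdt t) as [_ H2]. pose proof (Rabs_pos (s - t)).
  destruct (H2 Ht s z Hs ltac:(lra) ltac:(lra)). rabs. Qed.

(** * Total variation *)

Definition var_sums (A : R -> R) a b (x : R) : Prop := exists n p, is_partition a b n p /\ x = var_sum A n p.
Definition tvar (A : R -> R) a b : R := epsilon (inhabits 0) (is_lub (var_sums A a b)).

Definition pair_part (a b : R) : nat -> R := fun k => match k with O => a | _ => b end.

Lemma pair_partition a b : a <= b -> is_partition a b 1 (pair_part a b).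
Proof. intros H. split; [auto|split; [auto|]]. intros k Hk. assert (k = O) by lia. subst. simpl. auto. Qed.

Lemma var_sum_pair A a b : var_sum A 1 (pair_part a b) = Rabs (A b - A a).
Proof. unfold var_sum. simpl. lra. Qed.

Lemma var_sum_pcat A a b c n1 n2 p1 p2 : is_partition a b n1 p1 -> is_partition b c n2 p2 ->
  var_sum A (n1 + n2) (pcat n1 p1 p2) = var_sum A n1 p1 + var_sum A n2 p2.
Proof. intros [_ [H1 _]] [H2 _]. unfold var_sum.
  apply (rsum_pcat n1 n2 p1 p2 (fun u v => Rabs (A u - A v))). congruence. Qed.

Lemma var_sums_bound A a b : 0 <= a -> a <= b -> b <= 1 -> bounded_variation01 A -> bound (var_sums A a b).
Proof. intros Ha Hab Hb [M HM]. exists M. intros x [n [p [Hp ->]]].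
  pose proof (pcat_partition _ _ _ _ _ _ _ (pair_partition 0 a Ha) Hp) as H1.
  pose proof (pcat_partition _ _ _ _ _ _ _ H1 (pair_partition b 1 Hb)) as H2.
  specialize (HM _ _ H2). fold (var_sum A (1 + n + 1) (pcat (1 + n) (pcat 1 (pair_part 0 a) p) (pair_part b 1))) in HM.
  rewrite (var_sum_pcat A 0 b 1 _ _ _ _ H1 (pair_partition b 1 Hb)) in HM.
  rewrite (var_sum_pcat A 0 a b _ _ _ _ (pair_partition 0 a Ha) Hp) in HM.
  pose proof (var_sum_nonneg A 1 (pair_part 0 a)). pose proof (var_sum_nonneg A 1 (pair_part b 1)). lra. Qed.

Lemma var_sums_inhabited A a b : a <= b -> exists x, var_sums A a b x.
Proof. intros H. exists (var_sum A 1 (pair_part a b)), 1%nat, (pair_part a b). split; auto.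
  apply pair_partition; auto. Qed.

Lemma tvar_lub A a b : 0 <= a -> a <= b -> b <= 1 -> bounded_variation01 A ->
  is_lub (var_sums A a b) (tvar A a b).
Proof. intros. unfold tvar. apply epsilon_spec.
  destruct (completeness _ (var_sums_bound A a b H H0 H1 H2) (var_sums_inhabited A a b H0)) as [m Hm].
  exists m; exact Hm. Qed.

Lemma tvar_ge A a b n p : 0 <= a -> b <= 1 -> bounded_variation01 A -> is_partition a b n p ->
  var_sum A n p <= tvar A a b.
Proof. intros Ha Hb HA Hp. assert (a <= b) by (destruct (partition_in a b n p Hp 0 ltac:(lia)) as [? ?];
  destruct (partition_in a b n p Hp n ltac:(lia)); destruct Hp as [Hq0 [Hqn _]]; lra).
  destruct (tvar_lub A a b Ha H Hb HA) as [Hu _]. apply Hu. exists n, p; auto. Qed.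

Lemma tvar_le A a b M : 0 <= a -> a <= b -> b <= 1 -> bounded_variation01 A ->
  (forall n p, is_partition a b n p -> var_sum A n p <= M) -> tvar A a b <= M.
Proof. intros Ha Hab Hb HA H. destruct (tvar_lub A a b Ha Hab Hb HA) as [_ Hl]. apply Hl.
  intros x [n [p [Hp ->]]]. auto. Qed.

Lemma tvar_approx A a b e : 0 <= a -> a <= b -> b <= 1 -> bounded_variation01 A -> 0 < e ->
  exists n p, is_partition a b n p /\ tvar A a b - e < var_sum A n p.
Proof. intros Ha Hab Hb HA He. apply NNPP. intros Hn.
  assert (tvar A a b <= tvar A a b - e); [|lra].
  apply tvar_le; auto. intros n p Hp. apply Rnot_lt_le. intros Hlt. apply Hn. exists n, p; auto. Qed.

Lemma tvar_nonneg A a b : 0 <= a -> a <= b -> b <= 1 -> bounded_variation01 A -> 0 <= tvar A a b.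
Proof. intros. eapply Rle_trans; [|apply (tvar_ge A a b 1 (pair_part a b)); auto; apply pair_partition; auto].
  apply var_sum_nonneg. Qed.

Lemma tvar_abs A a b : 0 <= a -> a <= b -> b <= 1 -> bounded_variation01 A -> Rabs (A b - A a) <= tvar A a b.
Proof. intros. rewrite <- var_sum_pair. apply tvar_ge; auto. apply pair_partition; auto. Qed.

Lemma tvar_point A a : 0 <= a <= 1 -> bounded_variation01 A -> tvar A a a = 0.
Proof. intros Ha HA. apply Rle_antisym; [|apply tvar_nonneg; auto; lra].
  apply tvar_le; try lra; auto. intros n p Hp. unfold var_sum. rewrite (rsum_ext n _ (fun _ => 0)).
  rewrite rsum_zero; lra. intros k Hk. pose proof (partition_in a a n p Hp k ltac:(lia)).
  pose proof (partition_in a a n p Hp (S k) ltac:(lia)). replace (p (S k)) with (p k) by lra.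
  replace (A (p k) - A (p k)) with 0 by ring. apply Rabs_R0. Qed.

Lemma clamp_term (A : R -> R) b p q : p <= q ->
  Rabs (A q - A p) <= Rabs (A (Rmin q b) - A (Rmin p b)) + Rabs (A (Rmax q b) - A (Rmax p b)).
Proof. intros Hpq. destruct (Rle_dec q b); destruct (Rle_dec p b).
  - rewrite (Rmin_left q b), (Rmin_left p b), (Rmax_right q b), (Rmax_right p b) by lra. rabs.
  - lra.
  - rewrite (Rmin_right q b), (Rmin_left p b), (Rmax_left q b), (Rmax_right p b) by lra. rabs.
  - rewrite (Rmin_right q b), (Rmin_right p b), (Rmax_left q b), (Rmax_left p b) by lra. rabs. Qed.

Lemma clamp_part_min a b c n p : a <= b <= c -> is_partition a c n p ->
  is_partition a b n (fun k => Rmin (p k) b).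
Proof. intros Hb [H0 [Hn Hm]]. split; [|split].
  - rewrite H0. apply Rmin_left; lra.
  - rewrite Hn. apply Rmin_right; lra.
  - intros k Hk. specialize (Hm k Hk). unfold Rmin. destruct Rle_dec; destruct Rle_dec; lra. Qed.

Lemma clamp_part_max a b c n p : a <= b <= c -> is_partition a c n p ->
  is_partition b c n (fun k => Rmax (p k) b).
Proof. intros Hb [H0 [Hn Hm]]. split; [|split].
  - rewrite H0. apply Rmax_right; lra.
  - rewrite Hn. apply Rmax_left; lra.
  - intros k Hk. specialize (Hm k Hk). unfold Rmax. destruct Rle_dec; destruct Rle_dec; lra. Qed.

Lemma var_sum_clamp A a b c n p : is_partition a c n p ->
  var_sum A n p <= var_sum A n (fun k => Rmin (p k) b) + var_sum A n (fun k => Rmax (p k) b).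
Proof. intros [_ [_ Hm]]. unfold var_sum. rewrite <- rsum_plus. apply rsum_le. intros k Hk.
  apply clamp_term. auto. Qed.

Lemma tvar_add A a b c : 0 <= a -> a <= b -> b <= c -> c <= 1 -> bounded_variation01 A ->
  tvar A a c = tvar A a b + tvar A b c.
Proof. intros Ha Hab Hbc Hc HA. apply Rle_antisym.
  - apply tvar_le; auto; try lra. intros n p Hp. eapply Rle_trans; [apply (var_sum_clamp A a b c n p Hp)|].
    apply Rplus_le_compat; apply tvar_ge; auto; try lra.
    apply (clamp_part_min a b c); auto. apply (clamp_part_max a b c); auto.
  - apply Rle_plus_epsilon. intros e He.
    destruct (tvar_approx A a b (e/2)) as [n1 [p1 [Hp1 H1]]]; auto; try lra.
    destruct (tvar_approx A b c (e/2)) as [n2 [p2 [Hp2 H2]]]; auto; try lra.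
    pose proof (tvar_ge A a c _ _ Ha Hc HA (pcat_partition _ _ _ _ _ _ _ Hp1 Hp2)).
    rewrite (var_sum_pcat A a b c _ _ _ _ Hp1 Hp2) in H. lra. Qed.

Lemma var_sum_two_values A n (q : nat -> R) u v : (forall k, (k < n)%nat -> q k <= q (S k)) ->
  (forall k, (k <= n)%nat -> q k = u \/ q k = v) -> var_sum A n q = Rabs (A (q n) - A (q O)).
Proof. intros Hm Hv. assert (Hmon : forall k, (k <= n)%nat -> q O <= q k).
  { induction k; intros; [lra|]. pose proof (Hm k ltac:(lia)). specialize (IHk ltac:(lia)). lra. }
  induction n. unfold var_sum; simpl. replace (A (q O) - A (q O)) with 0 by ring. rewrite Rabs_R0; auto.
  unfold var_sum in *. simpl. rewrite IHn; try (intros; apply Hm || apply Hv || apply Hmon; lia).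
  pose proof (Hm n ltac:(lia)). pose proof (Hmon n ltac:(lia)).
  destruct (Req_dec (q (S n)) (q n)) as [E|E].
  { rewrite E. replace (A (q n) - A (q n)) with 0 by ring. rewrite Rabs_R0. ring. }
  assert (Hlt : q n < q (S n)) by (destruct (Rle_lt_or_eq_dec _ _ H); auto; congruence).
  assert (E0 : q O = q n) by (destruct (Hv (S n) ltac:(lia)), (Hv n ltac:(lia)), (Hv O ltac:(lia)); lra).
  rewrite E0. replace (A (q n) - A (q n)) with 0 by ring. rewrite Rabs_R0. ring. Qed.

Lemma finite_gap n (p : nat -> R) c : exists eta, 0 < eta /\
  forall k, (k <= n)%nat -> c < p k -> c + eta <= p k.
Proof. induction n.
  - destruct (Rlt_dec c (p O)); [exists (p O - c)|exists 1]; split; try lra;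
      intros k Hk Hc; assert (k = O) by lia; subst; lra.
  - destruct IHn as [eta [He H]]. destruct (Rlt_dec c (p (S n))).
    + exists (Rmin eta (p (S n) - c)). split. apply Rmin_glb_lt; lra. intros k Hk Hc.
      pose proof (Rmin_l eta (p (S n) - c)). pose proof (Rmin_r eta (p (S n) - c)).
      destruct (Nat.eq_dec k (S n)). subst; lra. specialize (H k ltac:(lia) Hc). lra.
    + exists eta. split; auto. intros k Hk Hc. destruct (Nat.eq_dec k (S n)). subst; lra. apply H; auto; lia.
Qed.

(* A nearly optimal partition of [c, 1] has no point in (c, y) for y close to c, so almost all of its
   variation is seen on [y, 1], and Var_c^y is at most |A y - A c| plus the defect. *)
Lemma tvar_right_small A c e : cont01 A -> bounded_variation01 A -> 0 <= c <= 1 -> 0 < e ->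
  exists dl, 0 < dl /\ forall x, c <= x <= 1 -> x - c < dl -> tvar A c x < e.
Proof. intros HAc HA Hc He. destruct (Req_dec c 1) as [E|Hc1].
  { exists 1. split; [lra|]. intros x Hx _. replace x with c by lra. rewrite tvar_point; auto. }
  destruct (tvar_approx A c 1 (e/2)) as [n [p [Hp Hs]]]; try lra; auto.
  destruct (finite_gap n p c) as [eta [Heta Hg]].
  destruct (HAc c Hc (e/2) ltac:(lra)) as [dA [HdA HA']].
  set (y := c + Rmin eta dA / 2). pose proof (Rmin_l eta dA). pose proof (Rmin_r eta dA).
  assert (0 < Rmin eta dA) by (apply Rmin_glb_lt; auto).
  assert (Hy1 : y <= 1).
  { destruct Hp as [_ [Hn _]]. specialize (Hg n (le_n n)). rewrite Hn in Hg. unfold y. lra. }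
  assert (Hcy : c < y) by (unfold y; lra).
  pose proof (var_sum_clamp A c y 1 n p Hp) as Hcl.
  rewrite (var_sum_two_values A n (fun k => Rmin (p k) y) c y) in Hcl.
  2: { intros k Hk; apply (proj2 (proj2 (clamp_part_min c y 1 n p ltac:(lra) Hp))); auto. }
  2: { intros k Hk. pose proof (partition_in c 1 n p Hp k Hk). destruct (Req_dec (p k) c) as [Epk|Epk].
       left. rewrite Epk. apply Rmin_left; lra. right. apply Rmin_right. specialize (Hg k Hk ltac:(lra)).
       unfold y; lra. }
  pose proof Hp as Hpp. destruct Hp as [Hp0 [Hpn Hmn]]. rewrite Hp0, Hpn in Hcl.
  rewrite (Rmin_left c y), (Rmin_right 1 y) in Hcl by lra.
  assert (Rabs (A y - A c) < e/2) by (apply HA'; try lra; unfold y; rabs).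
  pose proof (tvar_ge A y 1 n (fun k => Rmax (p k) y) ltac:(lra) ltac:(lra) HA (clamp_part_max c y 1 n p ltac:(lra) Hpp)).
  rewrite (tvar_add A c y 1) in Hs; try lra; auto.
  exists (y - c). split; [lra|]. intros x Hx Hxc.
  pose proof (tvar_add A c x y ltac:(lra) ltac:(lra) ltac:(lra) ltac:(lra) HA).
  pose proof (tvar_nonneg A x y ltac:(lra) ltac:(lra) ltac:(lra) HA). lra. Qed.

Lemma tvar_left_small A c e : cont01 A -> bounded_variation01 A -> 0 <= c <= 1 -> 0 < e ->
  exists dl, 0 < dl /\ forall x, 0 <= x <= c -> c - x < dl -> tvar A x c < e.
Proof. intros HAc HA Hc He. destruct (Req_dec c 0) as [E|Hc1].
  { exists 1. split; [lra|]. intros x Hx _. replace x with c by lra. rewrite tvar_point; auto. }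
  destruct (tvar_approx A 0 c (e/2)) as [n [p [Hp Hs]]]; try lra; auto.
  destruct (finite_gap n (fun k => - p k) (- c)) as [eta [Heta Hg]].
  destruct (HAc c Hc (e/2) ltac:(lra)) as [dA [HdA HA']].
  set (y := c - Rmin eta dA / 2). pose proof (Rmin_l eta dA). pose proof (Rmin_r eta dA).
  assert (0 < Rmin eta dA) by (apply Rmin_glb_lt; auto).
  assert (Hy1 : 0 <= y).
  { destruct Hp as [Hp0 _]. specialize (Hg O (le_0_n n)). simpl in Hg. rewrite Hp0 in Hg. unfold y. lra. }
  assert (Hcy : y < c) by (unfold y; lra).
  pose proof (var_sum_clamp A 0 y c n p Hp) as Hcl.
  rewrite (var_sum_two_values A n (fun k => Rmax (p k) y) y c) in Hcl.
  2: { intros k Hk; apply (proj2 (proj2 (clamp_part_max 0 y c n p ltac:(lra) Hp))); auto. }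
  2: { intros k Hk. pose proof (partition_in 0 c n p Hp k Hk). destruct (Req_dec (p k) c) as [Epk|Epk].
       right. rewrite Epk. apply Rmax_left; lra. left. apply Rmax_right. specialize (Hg k Hk ltac:(lra)).
       unfold y; lra. }
  pose proof Hp as Hpp. destruct Hp as [Hp0 [Hpn Hmn]]. rewrite Hp0, Hpn in Hcl.
  rewrite (Rmax_right 0 y), (Rmax_left c y) in Hcl by lra.
  assert (Rabs (A c - A y) < e/2).
  { assert (Rabs (A y - A c) < e/2) by (apply HA'; try lra; unfold y; rabs). rewrite Rabs_minus_sym; auto. }
  pose proof (tvar_ge A 0 y n (fun k => Rmin (p k) y) ltac:(lra) ltac:(lra) HA (clamp_part_min 0 y c n p ltac:(lra) Hpp)).
  rewrite (tvar_add A 0 y c) in Hs; try lra; auto.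
  exists (c - y). split; [lra|]. intros x Hx Hxc.
  pose proof (tvar_add A y x c ltac:(lra) ltac:(lra) ltac:(lra) ltac:(lra) HA).
  pose proof (tvar_nonneg A y x ltac:(lra) ltac:(lra) ltac:(lra) HA). lra. Qed.

Lemma tvar_cont A : cont01 A -> bounded_variation01 A -> cont01 (fun x => tvar A 0 x).
Proof. intros HAc HA c Hc e He. destruct (tvar_right_small A c e HAc HA Hc He) as [d1 [Hd1 H1]].
  destruct (tvar_left_small A c e HAc HA Hc He) as [d2 [Hd2 H2]].
  exists (Rmin d1 d2). split; [apply Rmin_pos; auto|].
  intros s Hs Hsc. pose proof (Rmin_l d1 d2). pose proof (Rmin_r d1 d2). destruct (Rle_dec c s).
  - rewrite (tvar_add A 0 c s) by (auto; lra). specialize (H1 s ltac:(lra) ltac:(rabs)).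
    pose proof (tvar_nonneg A c s ltac:(lra) ltac:(lra) ltac:(lra) HA). rabs.
  - rewrite (tvar_add A 0 s c) by (auto; lra). specialize (H2 s ltac:(lra) ltac:(rabs)).
    pose proof (tvar_nonneg A s c ltac:(lra) ltac:(lra) ltac:(lra) HA). rabs. Qed.

(** * Integrals over [0, t] *)

Lemma rsum_const n c : rsum n (fun _ => c) = INR n * c.
Proof. induction n. simpl; ring. rewrite S_INR. simpl. rewrite IHn. ring. Qed.

Definition RSint h A a b : R := epsilon (inhabits 0) (is_RS_integral h A a b).

Lemma RSint_spec h A a b I : is_RS_integral h A a b I -> is_RS_integral h A a b (RSint h A a b).
Proof. intros HI. unfold RSint. apply epsilon_spec. eauto. Qed.

Lemma RSint_eq h A a b I : a <= b -> is_RS_integral h A a b I -> RSint h A a b = I.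
Proof. intros Hab HI. apply (RS_integral_unique h A a b); auto. apply (RSint_spec h A a b I HI). Qed.

Lemma RSint_ext h1 h2 A a b I : a <= b -> is_RS_integral h1 A a b I ->
  (forall s, a <= s <= b -> h1 s = h2 s) -> RSint h1 A a b = RSint h2 A a b.
Proof. intros Hab HI He. rewrite (RSint_eq h1 A a b I); auto.
  rewrite (RSint_eq h2 A a b I); auto. apply (RS_integral_ext h1); auto. Qed.

Lemma RS_integral_point h A a : is_RS_integral h A a a 0.
Proof. intros e He. exists 1. split; [lra|]. intros n p xi Hp _ _. unfold RS_sum.
  rewrite (rsum_ext n _ (fun _ => 0)). rewrite rsum_zero. rewrite Rminus_0_r, Rabs_R0; auto.
  intros k Hk. pose proof (partition_in a a n p Hp k ltac:(lia)).
  pose proof (partition_in a a n p Hp (S k) ltac:(lia)).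
  replace (p (S k)) with (p k) by lra. ring. Qed.

Lemma RS_integral_exists01 h A t : cont01 h -> cont01 A -> bounded_variation01 A -> 0 <= t <= 1 ->
  exists I, is_RS_integral h A 0 t I.
Proof. intros Hh HAc HA Ht. apply (RS_integral_exists h A 0 t (tvar A 0 t)). lra.
  apply unif_cont_sub; try lra. apply cont01_unif; auto.
  apply unif_cont_sub; try lra. apply cont01_unif; auto.
  intros n p Hp. apply tvar_ge; auto; lra. Qed.

Lemma RSint_spec01 h A t : cont01 h -> cont01 A -> bounded_variation01 A -> 0 <= t <= 1 ->
  is_RS_integral h A 0 t (RSint h A 0 t).
Proof. intros Hh HAc HA Ht. destruct (RS_integral_exists01 h A t Hh HAc HA Ht) as [I HI].
  exact (RSint_spec h A 0 t I HI). Qed.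

Lemma cont01_rsum d (F : nat -> R -> R) : (forall i, (i < d)%nat -> cont01 (F i)) ->
  cont01 (fun t => rsum d (fun i => F i t)).
Proof. induction d; intros H t Ht e He; simpl.
  - exists 1. split; [lra|]. intros. rewrite Rminus_0_r, Rabs_R0; auto.
  - destruct (IHd ltac:(intros; apply H; lia) t Ht (e/2) ltac:(lra)) as [d1 [Hd1 H1]].
    destruct (H d ltac:(lia) t Ht (e/2) ltac:(lra)) as [d2 [Hd2 H2]].
    exists (Rmin d1 d2). split. apply Rmin_glb_lt; auto. intros s Hs Hst.
    pose proof (Rmin_l d1 d2). pose proof (Rmin_r d1 d2).
    specialize (H1 s Hs ltac:(lra)). specialize (H2 s Hs ltac:(lra)). simpl in H1. rabs. Qed.

Lemma common_delta d (P : nat -> R -> Prop) : (forall i dl dl', 0 < dl' <= dl -> P i dl -> P i dl') ->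
  (forall i, (i < d)%nat -> exists dl, 0 < dl /\ P i dl) ->
  exists dl, 0 < dl /\ forall i, (i < d)%nat -> P i dl.
Proof. intros Hm. induction d; intros H.
  - exists 1. split; [lra|]. intros; lia.
  - destruct IHd as [d1 [Hd1 H1]]. intros; apply H; lia. destruct (H d ltac:(lia)) as [d2 [Hd2 H2]].
    exists (Rmin d1 d2). pose proof (Rmin_l d1 d2). pose proof (Rmin_r d1 d2).
    assert (0 < Rmin d1 d2) by (apply Rmin_glb_lt; auto). split; auto.
    intros i Hi. destruct (Nat.eq_dec i d). subst. apply (Hm d d2); auto; lra.
    apply (Hm i d1); [lra| apply H1; lia]. Qed.

Lemma RS_integral_increment_le phi A t t' I1 I2 K : 0 <= t' <= t -> t <= 1 -> bounded_variation01 A ->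
  is_RS_integral phi A 0 t I1 -> is_RS_integral phi A 0 t' I2 ->
  (forall s, 0 <= s <= t -> Rabs (phi s) <= K) -> Rabs (I1 - I2) <= K * tvar A t' t.
Proof. intros Ht' Ht HA H1 H2 HK. apply Rle_plus_epsilon. intros e He.
  destruct (H1 (e/2) ltac:(lra)) as [d1 [Hd1 H1']]. destruct (H2 (e/2) ltac:(lra)) as [d2 [Hd2 H2']].
  set (dl := Rmin d1 d2). assert (0 < dl) by (apply Rmin_glb_lt; auto).
  pose proof (Rmin_l d1 d2). pose proof (Rmin_r d1 d2).
  destruct (fine_upart 0 t' dl ltac:(lra) H) as [n1 [_ [Hp1 [Hm1 _]]]].
  destruct (fine_upart t' t dl ltac:(lra) H) as [n2 [_ [Hp2 [Hm2 _]]]].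
  set (p1 := upart 0 t' n1) in *. set (p2 := upart t' t n2) in *.
  assert (Hj : p1 n1 = p2 O) by (destruct Hp1 as [_ [E1 _]]; destruct Hp2 as [E2 _]; congruence).
  pose proof (pcat_partition _ _ _ _ _ _ _ Hp1 Hp2) as Hp.
  pose proof (pcat_mesh n1 n2 p1 p2 dl Hj Hm1 Hm2) as Hm.
  set (q := pcat n1 p1 p2) in *.
  assert (Htq : is_tagging (n1 + n2) q q) by (apply tagging_left; apply Hp).
  specialize (H1' _ _ _ Hp ltac:(apply (mesh_lt_weaken _ _ d1 dl); auto) Htq).
  assert (Htp1 : is_tagging n1 p1 p1) by (apply tagging_left; apply Hp1).
  specialize (H2' _ _ _ Hp1 ltac:(apply (mesh_lt_weaken _ _ d2 dl); auto) Htp1).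
  unfold RS_sum in *. unfold q in H1'.
  rewrite (rsum_pcat n1 n2 p1 p2 (fun u v => phi v * (A u - A v)) Hj) in H1'.
  assert (Rabs (rsum n2 (fun k => phi (p2 k) * (A (p2 (S k)) - A (p2 k)))) <= K * tvar A t' t).
  { eapply Rle_trans; [apply rsum_abs|]. eapply Rle_trans.
    apply (rsum_le n2 _ (fun k => K * Rabs (A (p2 (S k)) - A (p2 k)))).
    intros k Hk. rewrite Rabs_mult. apply Rmult_le_compat_r. apply Rabs_pos. apply HK.
    pose proof (partition_in _ _ _ _ Hp2 k ltac:(lia)). lra.
    rewrite rsum_scal. apply Rmult_le_compat_l.
    pose proof (HK 0 ltac:(lra)). pose proof (Rabs_pos (phi 0)). lra.
    apply tvar_ge; auto; lra. }
  rabs. Qed.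

Lemma RSint_increment_le phi A s t K : cont01 phi -> cont01 A -> bounded_variation01 A ->
  0 <= s <= t -> t <= 1 -> (forall u, 0 <= u <= 1 -> Rabs (phi u) <= K) ->
  Rabs (RSint phi A 0 t - RSint phi A 0 s) <= K * (tvar A 0 t - tvar A 0 s).
Proof. intros Hphi HAc HA Hst Ht HK.
  destruct (RS_integral_exists01 phi A t Hphi HAc HA ltac:(lra)) as [It HIt].
  destruct (RS_integral_exists01 phi A s Hphi HAc HA ltac:(lra)) as [Is HIs].
  rewrite (RSint_eq phi A 0 t It), (RSint_eq phi A 0 s Is), (tvar_add A 0 s t) by (auto; lra).
  replace (tvar A 0 s + tvar A s t - tvar A 0 s) with (tvar A s t) by ring.
  apply (RS_integral_increment_le phi A t s); auto. intros u Hu. apply HK. lra. Qed.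

Lemma RSint_cont phi A : cont01 phi -> cont01 A -> bounded_variation01 A -> cont01 (fun t => RSint phi A 0 t).
Proof. intros Hphi HAc HA t Ht e He. destruct (cont01_bounded phi Hphi) as [K HK].
  assert (HK0 : 0 <= K) by (pose proof (HK 0 ltac:(lra)); pose proof (Rabs_pos (phi 0)); lra).
  destruct (tvar_cont A HAc HA t Ht (e / (K + 1))) as [dl [Hdl HV]]; [apply Rdiv_lt_0_compat; lra|].
  exists dl. split; auto. intros s Hs Hst. specialize (HV s Hs Hst).
  assert (Hq : K * (e / (K + 1)) < e) by (replace e with (e / (K + 1) * (K + 1)) at 2 by (field; lra);
    pose proof (Rdiv_lt_0_compat e (K + 1) He ltac:(lra)); nra).
  destruct (Rle_dec s t).
  - pose proof (RSint_increment_le phi A s t K Hphi HAc HA ltac:(lra) ltac:(lra) HK).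
    pose proof (tvar_nonneg A s t ltac:(lra) ltac:(lra) ltac:(lra) HA).
    rewrite (tvar_add A 0 s t) in *; auto; try lra.
    assert (K * tvar A s t <= K * (e / (K + 1))) by (apply Rmult_le_compat_l; auto; rabs). rabs.
  - pose proof (RSint_increment_le phi A t s K Hphi HAc HA ltac:(lra) ltac:(lra) HK).
    pose proof (tvar_nonneg A t s ltac:(lra) ltac:(lra) ltac:(lra) HA).
    rewrite (tvar_add A 0 t s) in *; auto; try lra.
    assert (K * tvar A t s <= K * (e / (K + 1))) by (apply Rmult_le_compat_l; auto; rabs). rabs. Qed.

Lemma RSint_point h A : RSint h A 0 0 = 0.
Proof. apply RSint_eq. lra. apply RS_integral_point. Qed.

Lemma RS_integral_minus h1 h2 A a b I1 I2 : is_RS_integral h1 A a b I1 -> is_RS_integral h2 A a b I2 ->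
  is_RS_integral (fun s => h1 s - h2 s) A a b (I1 - I2).
Proof. intros H1 H2. replace (I1 - I2) with (I1 + -1 * I2) by ring.
  apply (RS_integral_ext (fun s => h1 s + -1 * h2 s)); [intros; ring|].
  apply RS_integral_plus; auto. apply RS_integral_scal; auto. Qed.

Lemma exp_le x y : x <= y -> exp x <= exp y.
Proof. intros H. destruct (Rle_lt_or_eq_dec _ _ H). left; apply exp_increasing; auto. subst; lra. Qed.

Lemma exp_increment_le c u v : 0 <= c -> u <= v -> c * exp (c * u) * (v - u) <= exp (c * v) - exp (c * u).
Proof. intros Hc Huv. replace (c * v) with (c * u + c * (v - u)) by ring. rewrite exp_plus.
  pose proof (exp_ineq1_le (c * (v - u))). pose proof (exp_pos (c * u)). nra. Qed.

Lemma pow_increment_le j x y : 0 <= x <= y -> INR (S j) * x ^ j * (y - x) <= y ^ (S j) - x ^ (S j).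
Proof. intros Hxy. induction j.
  - simpl. lra.
  - rewrite (S_INR (S j)), (S_INR j). rewrite S_INR in IHj. simpl pow in *.
    assert (Hxj : 0 <= x ^ j) by (apply pow_le; lra).
    set (Xj := x ^ j) in *. set (Y := y ^ j) in *.
    assert (H1 : y * (y * Y) >= y * (x * Xj + (INR j + 1) * Xj * (y - x))) by (apply Rmult_ge_compat_l; lra).
    assert (H2 : (INR j + 1) * y * Xj * (y - x) >= (INR j + 1) * x * Xj * (y - x)).
    { pose proof (pos_INR j). assert (0 <= (INR j + 1) * Xj * (y - x)) by (apply Rmult_le_pos; [apply Rmult_le_pos|]; lra).
      nra. }
    nra. Qed.

(** * The Arzela-Ascoli theorem *)

Definition increasing (psi : nat -> nat) := forall k, (psi k < psi (S k))%nat.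

Lemma increasing_lt psi : increasing psi -> forall k l, (k < l)%nat -> (psi k < psi l)%nat.
Proof. intros H k l Hkl. induction Hkl. apply H. specialize (H m). lia. Qed.

Lemma increasing_ge psi : increasing psi -> forall k, (k <= psi k)%nat.
Proof. intros H k. induction k. lia. specialize (H k). lia. Qed.

Lemma increasing_comp p q : increasing p -> increasing q -> increasing (fun k => p (q k)).
Proof. intros Hp Hq k. apply increasing_lt; auto. Qed.

Lemma cauchy_sub v psi : Cauchy_crit v -> increasing psi -> Cauchy_crit (fun k => v (psi k)).
Proof. intros H Hp e He. destruct (H e He) as [N HN]. exists N. intros m n Hm Hn.
  pose proof (increasing_ge psi Hp m). pose proof (increasing_ge psi Hp n). apply HN; lia. Qed.

Lemma cluster_point_bounded (a : nat -> R) M : (forall n, -M <= a n <= M) ->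
  exists l, forall e, 0 < e -> forall N, exists p, (N <= p)%nat /\ Rabs (a p - l) < e.
Proof. intros Ha. destruct (Bolzano_Weierstrass a (fun c => -M <= c <= M) (compact_P3 (-M) M) Ha) as [l Hl].
  exists l. apply ValAdh_close; auto. Qed.

Fixpoint pick_chain (pick : nat -> nat -> nat) (k : nat) : nat :=
  match k with O => pick O O | S k' => pick k (S (pick_chain pick k')) end.

Lemma cauchy_subseq (a : nat -> R) M : (forall n, Rabs (a n) <= M) ->
  exists psi, increasing psi /\ Cauchy_crit (fun k => a (psi k)).
Proof. intros Ha. destruct (cluster_point_bounded a M) as [l Hl]. intros n; specialize (Ha n); rabs.
  assert (Hp : forall m N, {p | (N <= p)%nat /\ Rabs (a p - l) < inv_succ m}).
  { intros m N. apply constructive_indefinite_description. apply Hl. apply inv_succ_pos. }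
  set (pick := fun m N => proj1_sig (Hp m N)).
  assert (Hpick : forall m N, (N <= pick m N)%nat /\ Rabs (a (pick m N) - l) < inv_succ m)
    by (intros; apply (proj2_sig (Hp m N))).
  exists (pick_chain pick). split.
  - intros k. simpl. destruct (Hpick (S k) (S (pick_chain pick k))). lia.
  - assert (Hc : forall k, Rabs (a (pick_chain pick k) - l) < inv_succ k) by (destruct k; simpl; apply Hpick).
    intros e He. destruct (inv_succ_lt (e/2) ltac:(lra)) as [N HN]. exists N. intros m n Hm Hn.
    pose proof (Hc m). pose proof (Hc n). pose proof (HN m Hm). pose proof (HN n Hn). unfold R_dist; rabs. Qed.

Lemma cauchy_subseq_finite (u : nat -> R -> R) M (x : nat -> R) L :
  (forall n j, (j < L)%nat -> Rabs (u n (x j)) <= M) ->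
  exists psi, increasing psi /\ forall j, (j < L)%nat -> Cauchy_crit (fun k => u (psi k) (x j)).
Proof. induction L; intros Hb.
  - exists (fun k => k). split. intros k; lia. intros; lia.
  - destruct IHL as [p1 [Hi1 Hc1]]. intros; apply Hb; lia.
    destruct (cauchy_subseq (fun n => u (p1 n) (x L)) M) as [p2 [Hi2 Hc2]]. intros; apply Hb; lia.
    exists (fun k => p1 (p2 k)). split. apply increasing_comp; auto.
    intros j Hj. destruct (Nat.eq_dec j L). subst; auto.
    apply (cauchy_sub (fun k => u (p1 k) (x j)) p2); auto. apply Hc1; lia. Qed.

Definition grid (m j : nat) : R := INR j / INR (S m).

Lemma grid_in01 m j : (j <= S m)%nat -> 0 <= grid m j <= 1.
Proof. intros Hj. unfold grid. assert (0 < INR (S m)) by (apply lt_0_INR; lia). split.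
  - apply Rle_mult_inv_pos; auto. apply pos_INR.
  - apply Rmult_le_reg_r with (INR (S m)); auto.
    replace (INR j / INR (S m) * INR (S m)) with (INR j) by (field; lra).
    rewrite Rmult_1_l. apply le_INR; lia. Qed.

Lemma grid_near m t : 0 <= t <= 1 -> exists j, (j <= S m)%nat /\ Rabs (t - grid m j) <= / INR (S m).
Proof. intros Ht. assert (HS : 0 < INR (S m)) by (apply lt_0_INR; lia).
  assert (H : forall L, t <= INR L / INR (S m) -> exists j, (j <= L)%nat /\ Rabs (t - grid m j) <= / INR (S m)).
  { induction L; intros HL.
    - exists O. split; auto. unfold grid. simpl in *. unfold Rdiv in *. rewrite Rmult_0_l in *.
      replace t with 0 by lra. rewrite Rminus_0_r, Rabs_R0. left; apply Rinv_0_lt_compat; auto.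
    - destruct (Rle_dec t (INR L / INR (S m))). destruct (IHL r) as [j [Hj Hd]]. exists j; split; auto.
      exists (S L). split; auto. unfold grid in *. rewrite !S_INR in *.
      assert (INR L / (INR m + 1) < t) by lra.
      assert ((INR L + 1) / (INR m + 1) = INR L / (INR m + 1) + / (INR m + 1)) by (field; lra).
      pose proof (Rinv_0_lt_compat _ HS). rabs. }
  apply H. replace (INR (S m) / INR (S m)) with 1 by (field; lra). lra. Qed.

Lemma common_N L (P : nat -> nat -> Prop) : (forall j N N', (N <= N')%nat -> P j N -> P j N') ->
  (forall j, (j < L)%nat -> exists N, P j N) -> exists N, forall j, (j < L)%nat -> P j N.
Proof. intros Hm. induction L; intros H. exists O; intros; lia.
  destruct IHL as [N1 H1]. intros; apply H; lia. destruct (H L ltac:(lia)) as [N2 H2].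
  exists (N1 + N2)%nat. intros j Hj. destruct (Nat.eq_dec j L). subst. apply (Hm L N2); auto; lia.
  apply (Hm j N1); [lia|]. apply H1; lia. Qed.

(* [ext m phi] is a further subsequence of [phi], chosen at stage [m] of the diagonal argument. *)
Fixpoint diag_extract (ext : nat -> (nat -> nat) -> (nat -> nat)) (m : nat) : nat -> nat :=
  match m with
  | O => ext O (fun n => n)
  | S m' => fun k => diag_extract ext m' (ext m (diag_extract ext m') k)
  end.

Section Diagonal.
Variable ext : nat -> (nat -> nat) -> (nat -> nat).
Hypothesis ext_increasing : forall m phi, increasing (ext m phi).

Lemma diag_extract_increasing m : increasing (diag_extract ext m).
Proof. induction m; simpl. apply ext_increasing. apply increasing_comp; auto. Qed.

Lemma diag_extract_tail m dd k : exists r, (k <= r)%nat /\ diag_extract ext (m + dd) k = diag_extract ext m r.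
Proof. revert k. induction dd; intros k. exists k. rewrite Nat.add_0_r. split; auto.
  rewrite Nat.add_succ_r. simpl. set (phi := diag_extract ext (m + dd)).
  destruct (IHdd (ext (S (m + dd)) phi k)) as [r [Hr Er]].
  exists r. split; auto. pose proof (increasing_ge _ (ext_increasing (S (m + dd)) phi) k). lia. Qed.

Lemma diagonal_increasing : increasing (fun k => diag_extract ext k k).
Proof. intros k. simpl. apply increasing_lt; [apply diag_extract_increasing|].
  pose proof (increasing_ge _ (ext_increasing (S k) (diag_extract ext k)) (S k)). lia. Qed.

End Diagonal.

Lemma diagonal_cauchy_grid (u : nat -> R -> R) M : (forall n t, 0 <= t <= 1 -> Rabs (u n t) <= M) ->
  exists sigma, increasing sigma /\
    forall m j, (j < S (S m))%nat -> Cauchy_crit (fun k => u (sigma k) (grid m j)).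
Proof. intros Hb.
  assert (Hext : forall m (phi : nat -> nat), {psi | increasing psi /\ forall j, (j < S (S m))%nat ->
     Cauchy_crit (fun k => u (phi (psi k)) (grid m j))}).
  { intros m phi. apply constructive_indefinite_description.
    apply (cauchy_subseq_finite (fun n => u (phi n)) M (grid m) (S (S m))). intros n j Hj.
    apply Hb, grid_in01; lia. }
  set (ext := fun m phi => proj1_sig (Hext m phi)).
  assert (Hex : forall m phi, increasing (ext m phi) /\ forall j, (j < S (S m))%nat ->
     Cauchy_crit (fun k => u (phi (ext m phi k)) (grid m j))) by (intros; apply (proj2_sig (Hext m phi))).
  exists (fun k => diag_extract ext k k). split.
  - apply diagonal_increasing. intros; apply Hex.
  - intros m j Hj e He.
    assert (HPc : Cauchy_crit (fun k => u (diag_extract ext m k) (grid m j))).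
    { destruct m; simpl.
      - apply (proj2 (Hex 0%nat (fun n => n))); auto.
      - apply (proj2 (Hex (S m) (diag_extract ext m))); auto. }
    destruct (HPc e He) as [N HN]. exists (m + N)%nat. intros a b Ha Hb'.
    destruct (diag_extract_tail ext (fun m phi => proj1 (Hex m phi)) m (a - m)%nat a) as [ra [Hra Era]].
    destruct (diag_extract_tail ext (fun m phi => proj1 (Hex m phi)) m (b - m)%nat b) as [rb [Hrb Erb]].
    replace a with (m + (a - m))%nat at 1 by lia. replace b with (m + (b - m))%nat at 1 by lia.
    rewrite Era, Erb. apply HN; lia. Qed.

Lemma equicont_unif_cauchy (v : nat -> R -> R) :
  (forall e, 0 < e -> exists dl, 0 < dl /\ forall n s t, 0 <= s <= 1 -> 0 <= t <= 1 -> Rabs (s - t) < dl ->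
     Rabs (v n s - v n t) < e) ->
  (forall m j, (j < S (S m))%nat -> Cauchy_crit (fun k => v k (grid m j))) ->
  forall e, 0 < e -> exists N, forall a b t, (N <= a)%nat -> (N <= b)%nat -> 0 <= t <= 1 ->
     Rabs (v a t - v b t) < e.
Proof. intros Heq Hsc e He. destruct (Heq (e/3) ltac:(lra)) as [dl [Hdl Hd]].
  destruct (INR_unbounded (/ dl)) as [m Hm].
  assert (Hm' : / INR (S m) < dl).
  { rewrite S_INR. assert (0 < / dl) by (apply Rinv_0_lt_compat; auto).
    replace dl with (/ / dl) by (field; lra). apply Rinv_lt_contravar; nra. }
  destruct (common_N (S (S m)) (fun j N => forall a b, (N <= a)%nat -> (N <= b)%nat ->
     Rabs (v a (grid m j) - v b (grid m j)) < e / 3)) as [N HN].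
  { intros j N N' HNN H a b Ha Hb'. apply H; lia. }
  { intros j Hj. apply (Hsc m j Hj (e/3) ltac:(lra)). }
  exists N. intros a b t Ha Hb' Ht. destruct (grid_near m t Ht) as [j [Hj Hjd]].
  pose proof (grid_in01 m j Hj) as Hxj.
  pose proof (HN j ltac:(lia) a b Ha Hb'). pose proof (Hd a t (grid m j) Ht Hxj ltac:(lra)).
  pose proof (Hd b t (grid m j) Ht Hxj ltac:(lra)). rabs. Qed.

Definition limv (v : nat -> R) : R := epsilon (inhabits 0) (Un_cv v).

Lemma limv_spec v : Cauchy_crit v -> Un_cv v (limv v).
Proof. intros H. unfold limv. apply epsilon_spec. destruct (R_complete v H) as [l Hl]. exists l; exact Hl. Qed.

Lemma unif_cauchy_limit (v : nat -> R -> R) :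
  (forall e, 0 < e -> exists N, forall a b t, (N <= a)%nat -> (N <= b)%nat -> 0 <= t <= 1 ->
     Rabs (v a t - v b t) < e) ->
  forall e, 0 < e -> exists N, forall k t, (N <= k)%nat -> 0 <= t <= 1 ->
  Rabs (v k t - limv (fun k => v k t)) < e.
Proof. intros Hunif e He. destruct (Hunif (e/2) ltac:(lra)) as [N HN]. exists N. intros k t Hk Ht.
  assert (Hcc : Cauchy_crit (fun k => v k t)).
  { intros e' He'. destruct (Hunif e' He') as [N' HN']. exists N'. intros a b Ha Hb'. apply HN'; auto. }
  destruct (limv_spec _ Hcc (e/2) ltac:(lra)) as [N2 HN2]. specialize (HN2 (N + N2)%nat ltac:(lia)).
  unfold R_dist in HN2. specialize (HN k (N + N2)%nat t Hk ltac:(lia) Ht). rabs. Qed.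

Lemma arzela_ascoli (u : nat -> R -> R) M : (forall n t, 0 <= t <= 1 -> Rabs (u n t) <= M) ->
  (forall e, 0 < e -> exists dl, 0 < dl /\ forall n s t, 0 <= s <= 1 -> 0 <= t <= 1 -> Rabs (s - t) < dl ->
     Rabs (u n s - u n t) < e) ->
  exists (sigma : nat -> nat) (B : R -> R), increasing sigma /\
    forall e, 0 < e -> exists N, forall k t, (N <= k)%nat -> 0 <= t <= 1 -> Rabs (u (sigma k) t - B t) < e.
Proof. intros Hb Heq. destruct (diagonal_cauchy_grid u M Hb) as [sigma [Hsig Hsc]].
  exists sigma, (fun t => limv (fun k => u (sigma k) t)). split; auto.
  apply unif_cauchy_limit, equicont_unif_cauchy; auto.
  intros e He. destruct (Heq e He) as [dl [Hdl Hd]]. exists dl. split; auto. Qed.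

Lemma unif_limit_cont (v : nat -> R -> R) B : (forall n, cont01 (v n)) ->
  (forall e, 0 < e -> exists N, forall k t, (N <= k)%nat -> 0 <= t <= 1 -> Rabs (v k t - B t) < e) ->
  cont01 B.
Proof. intros Hv Hconv t Ht e He. destruct (Hconv (e/3) ltac:(lra)) as [N HN].
  destruct (Hv N t Ht (e/3) ltac:(lra)) as [dl [Hdl Hd]]. exists dl. split; auto. intros s Hs Hst.
  pose proof (HN N s (le_n N) Hs). pose proof (HN N t (le_n N) Ht). pose proof (Hd s Hs Hst). rabs. Qed.

Lemma cont01_plus f1 f2 : cont01 f1 -> cont01 f2 -> cont01 (fun t => f1 t + f2 t).
Proof. intros H1 H2 t Ht e He. destruct (H1 t Ht (e/2) ltac:(lra)) as [d1 [Hd1 H1']].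
  destruct (H2 t Ht (e/2) ltac:(lra)) as [d2 [Hd2 H2']]. exists (Rmin d1 d2). split. apply Rmin_glb_lt; auto.
  intros s Hs Hst. pose proof (Rmin_l d1 d2). pose proof (Rmin_r d1 d2).
  specialize (H1' s Hs ltac:(lra)). specialize (H2' s Hs ltac:(lra)). rabs. Qed.

Lemma delay_in01 s h : 0 <= s <= 1 -> 0 <= h -> 0 <= Rmax 0 (s - h) <= 1.
Proof. intros. unfold Rmax; destruct Rle_dec; lra. Qed.

Lemma cont01_delayed_comp g C h : cont01R g -> cont01 C -> 0 <= h -> cont01 (fun s => g s (C (Rmax 0 (s - h)))).
Proof. intros Hg HC Hh. apply (cont01_comp g (fun s => C (Rmax 0 (s - h)))); auto.
  apply cont01_delay; auto. Qed.

(** * The integral equation *)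

Section IntegralEquation.

Variable d : nat.
Variable A : nat -> R -> R.
Hypothesis HAc : forall i, (i < d)%nat -> cont01 (A i).
Hypothesis HAb : forall i, (i < d)%nat -> bounded_variation01 (A i).

Definition tvar_sum (s : R) : R := rsum d (fun i => tvar (A i) 0 s).

Lemma tvar_sum_incr u v : 0 <= u <= v -> v <= 1 ->
  rsum d (fun i => Rabs (A i v - A i u)) <= tvar_sum v - tvar_sum u.
Proof. intros Huv Hv. unfold tvar_sum. rewrite <- rsum_minus. apply rsum_le. intros i Hi.
  rewrite (tvar_add (A i) 0 u v) by (auto; lra). ring_simplify. apply tvar_abs; auto; lra. Qed.

Lemma tvar_sum_mono u v : 0 <= u <= v -> v <= 1 -> tvar_sum u <= tvar_sum v.
Proof. intros Huv Hv. pose proof (tvar_sum_incr u v Huv Hv).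
  assert (0 <= rsum d (fun i => Rabs (A i v - A i u))) by (apply rsum_nonneg; intros; apply Rabs_pos). lra. Qed.

Lemma tvar_sum_0 : tvar_sum 0 = 0.
Proof. unfold tvar_sum. rewrite (rsum_ext d _ (fun _ => 0)). apply rsum_zero.
  intros i Hi. apply tvar_point; auto; lra. Qed.

Lemma tvar_sum_nonneg s : 0 <= s <= 1 -> 0 <= tvar_sum s.
Proof. intros Hs. rewrite <- tvar_sum_0. apply tvar_sum_mono; lra. Qed.

Lemma tvar_sum_cont : cont01 tvar_sum.
Proof. unfold tvar_sum. apply (cont01_rsum d (fun i s => tvar (A i) 0 s)).
  intros i Hi. apply tvar_cont; auto. Qed.

Lemma rsum_RS_integral_bound (phi : nat -> R -> R) (I : nat -> R) (psi : R -> R) t : 0 <= t <= 1 ->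
  (forall i, (i < d)%nat -> is_RS_integral (phi i) (A i) 0 t (I i)) ->
  (forall i s, (i < d)%nat -> 0 <= s <= t -> Rabs (phi i s) <= psi s) ->
  (forall s, 0 <= s <= t -> 0 <= psi s) ->
  forall e, 0 < e -> exists N, (0 < N)%nat /\
    rsum d (fun i => Rabs (I i)) <= rsum N (fun k => psi (upart 0 t N k) *
       (tvar_sum (upart 0 t N (S k)) - tvar_sum (upart 0 t N k))) + e.
Proof. intros Ht HI Hphi Hpsi e He. pose proof (pos_INR d) as Hd0.
  set (e' := e / (INR d + 1)). assert (He' : 0 < e') by (apply Rdiv_lt_0_compat; lra).
  destruct (common_delta d (fun i dl => forall n p xi, is_partition 0 t n p -> mesh_lt n p dl ->
     is_tagging n p xi -> Rabs (RS_sum (phi i) (A i) n p xi - I i) < e')) as [dl [Hdl Hd]].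
  { intros i dl dl' Hdl' H n p xi Hp Hm Htg. apply H; auto. apply (mesh_lt_weaken n p dl dl'); auto; lra. }
  { intros i Hi. apply (HI i Hi e' He'). }
  destruct (fine_upart 0 t dl ltac:(lra) Hdl) as [N [HN [Hp [Hm Htg]]]].
  exists N. split; auto. set (u := upart 0 t N) in *.
  assert (Hs : forall i, (i < d)%nat ->
      Rabs (I i) <= rsum N (fun k => psi (u k) * Rabs (A i (u (S k)) - A i (u k))) + e').
  { intros i Hi. specialize (Hd i Hi N _ _ Hp Hm Htg).
    pose proof (RS_sum_abs_le (phi i) psi (A i) 0 t N u u Hp Htg (fun s Hs => Hphi i s Hi Hs)). rabs. }
  eapply Rle_trans; [apply (rsum_le d _ _ Hs)|]. rewrite rsum_plus, rsum_exchange, rsum_const.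
  apply Rplus_le_compat.
  - apply rsum_le. intros k Hk. rewrite rsum_scal. pose proof (partition_in 0 t N u Hp k ltac:(lia)).
    pose proof (partition_in 0 t N u Hp (S k) ltac:(lia)). destruct Hp as [_ [_ Hmo]].
    apply Rmult_le_compat_l; [apply Hpsi; lra|]. apply tvar_sum_incr; [split; [lra|apply Hmo; auto]|lra].
  - assert (e' * (INR d + 1) = e) by (unfold e'; field; lra). nra.
Qed.

Lemma rsum_RS_integral_le (phi : nat -> R -> R) (I : nat -> R) (psi F : R -> R) t : 0 <= t <= 1 ->
  (forall i, (i < d)%nat -> is_RS_integral (phi i) (A i) 0 t (I i)) ->
  (forall i s, (i < d)%nat -> 0 <= s <= t -> Rabs (phi i s) <= psi s) ->
  (forall s, 0 <= s <= t -> 0 <= psi s) ->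
  (forall u v, 0 <= u <= v -> v <= t -> psi u * (tvar_sum v - tvar_sum u) <= F v - F u) ->
  rsum d (fun i => Rabs (I i)) <= F t - F 0.
Proof. intros Ht HI Hphi Hpsi HF. apply Rle_plus_epsilon. intros e He.
  destruct (rsum_RS_integral_bound phi I psi t Ht HI Hphi Hpsi e He) as [N [HN Hb]].
  pose proof (upart_partition 0 t N ltac:(lra) HN) as Hp. set (u := upart 0 t N) in *.
  eapply Rle_trans; [exact Hb|]. apply Rplus_le_compat_r.
  replace (F t - F 0) with (rsum N (fun k => F (u (S k)) - F (u k)))
    by (rewrite (rsum_telescope N (fun k => F (u k))); destruct Hp as [-> [-> _]]; reflexivity).
  apply rsum_le. intros k Hk. pose proof (partition_in _ _ _ _ Hp k ltac:(lia)).
  pose proof (partition_in _ _ _ _ Hp (S k) ltac:(lia)). destruct Hp as [_ [_ Hmo]].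
  apply HF; [split; [lra|apply Hmo; auto]|lra]. Qed.

Lemma rsum_RS_integral_const_le (phi : nat -> R -> R) (I : nat -> R) K t : 0 <= t <= 1 ->
  (forall i, (i < d)%nat -> is_RS_integral (phi i) (A i) 0 t (I i)) ->
  (forall i s, (i < d)%nat -> 0 <= s <= t -> Rabs (phi i s) <= K) -> 0 <= K ->
  rsum d (fun i => Rabs (I i)) <= K * tvar_sum t.
Proof. intros Ht HI Hphi HK. replace (K * tvar_sum t) with (K * tvar_sum t - K * tvar_sum 0)
    by (rewrite tvar_sum_0; ring).
  apply (rsum_RS_integral_le phi I (fun _ => K) (fun s => K * tvar_sum s)); auto.
  intros u v _ _. apply Req_le. ring. Qed.

Lemma rsum_RS_integral_exp_le (phi : nat -> R -> R) (I : nat -> R) K c t : 0 <= t <= 1 ->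
  (forall i, (i < d)%nat -> is_RS_integral (phi i) (A i) 0 t (I i)) ->
  (forall i s, (i < d)%nat -> 0 <= s <= t -> Rabs (phi i s) <= K * c * exp (c * tvar_sum s)) ->
  0 <= K -> 0 <= c ->
  rsum d (fun i => Rabs (I i)) <= K * (exp (c * tvar_sum t) - 1).
Proof. intros Ht HI Hphi HK Hc.
  replace (K * (exp (c * tvar_sum t) - 1)) with (K * exp (c * tvar_sum t) - K * exp (c * tvar_sum 0))
    by (rewrite tvar_sum_0, Rmult_0_r, exp_0; ring).
  apply (rsum_RS_integral_le phi I (fun s => K * c * exp (c * tvar_sum s)) (fun s => K * exp (c * tvar_sum s))); auto.
  - intros s _. pose proof (exp_pos (c * tvar_sum s)). apply Rmult_le_pos; [apply Rmult_le_pos|]; lra.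
  - intros u v Huv Hv. pose proof (exp_increment_le c _ _ Hc (tvar_sum_mono u v Huv ltac:(lra))).
    replace (K * c * exp (c * tvar_sum u) * (tvar_sum v - tvar_sum u))
      with (K * (c * exp (c * tvar_sum u) * (tvar_sum v - tvar_sum u))) by ring.
    replace (K * exp (c * tvar_sum v) - K * exp (c * tvar_sum u))
      with (K * (exp (c * tvar_sum v) - exp (c * tvar_sum u))) by ring.
    apply Rmult_le_compat_l; auto. Qed.

Lemma rsum_RS_integral_pow_le (phi : nat -> R -> R) (I : nat -> R) K j t : 0 <= t <= 1 ->
  (forall i, (i < d)%nat -> is_RS_integral (phi i) (A i) 0 t (I i)) ->
  (forall i s, (i < d)%nat -> 0 <= s <= t -> Rabs (phi i s) <= K * tvar_sum s ^ j) -> 0 <= K ->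
  rsum d (fun i => Rabs (I i)) <= K * tvar_sum t ^ S j / INR (S j).
Proof. intros Ht HI Hphi HK. assert (HS : 0 < INR (S j)) by (apply lt_0_INR; lia).
  replace (K * tvar_sum t ^ S j / INR (S j))
    with (K * tvar_sum t ^ S j / INR (S j) - K * tvar_sum 0 ^ S j / INR (S j))
    by (rewrite tvar_sum_0, pow_i by lia; field; lra).
  apply (rsum_RS_integral_le phi I (fun s => K * tvar_sum s ^ j) (fun s => K * tvar_sum s ^ S j / INR (S j))); auto.
  - intros s Hs. apply Rmult_le_pos; auto. apply pow_le, tvar_sum_nonneg; lra.
  - intros u v Huv Hv. pose proof (pow_increment_le j (tvar_sum u) (tvar_sum v)
      (conj (tvar_sum_nonneg u ltac:(lra)) (tvar_sum_mono u v Huv ltac:(lra)))).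
    replace (K * tvar_sum v ^ S j / INR (S j) - K * tvar_sum u ^ S j / INR (S j))
      with (K * (tvar_sum v ^ S j - tvar_sum u ^ S j) / INR (S j)) by (field; lra).
    apply Rmult_le_reg_r with (INR (S j)); auto.
    replace (K * (tvar_sum v ^ S j - tvar_sum u ^ S j) / INR (S j) * INR (S j))
      with (K * (tvar_sum v ^ S j - tvar_sum u ^ S j)) by (field; lra).
    replace (K * tvar_sum u ^ j * (tvar_sum v - tvar_sum u) * INR (S j))
      with (K * (INR (S j) * tvar_sum u ^ j * (tvar_sum v - tvar_sum u))) by ring.
    apply Rmult_le_compat_l; auto. Qed.

Variable f : R -> R.
Variable g : nat -> R -> R -> R.
Hypothesis hf : cont01 f.
Hypothesis hg : forall i, (i < d)%nat -> cont01R (g i).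

Definition delay_step (h : R) (C : R -> R) (t : R) : R :=
  f t + rsum d (fun i => RSint (fun s => g i s (C (Rmax 0 (s - h)))) (A i) 0 t).

(* [delay_step h C] on [0, (k+1) h] only reads [C] on [0, k h], so each iteration leaves the values
   already computed unchanged. *)
Fixpoint tonelli (h : R) (k : nat) : R -> R :=
  match k with O => fun _ => f 0 | S k' => delay_step h (tonelli h k') end.

Lemma RSint_delayed C h i t : 0 <= h -> cont01 C -> (i < d)%nat -> 0 <= t <= 1 ->
  is_RS_integral (fun s => g i s (C (Rmax 0 (s - h)))) (A i) 0 t (RSint (fun s => g i s (C (Rmax 0 (s - h)))) (A i) 0 t).
Proof. intros Hh HC Hi Ht. apply RSint_spec01; auto. apply cont01_delayed_comp; auto. Qed.

Lemma delay_step_cont h C : 0 <= h -> cont01 C -> cont01 (delay_step h C).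
Proof. intros Hh HC. unfold delay_step. apply cont01_plus; auto.
  apply (cont01_rsum d (fun i t => RSint (fun s => g i s (C (Rmax 0 (s - h)))) (A i) 0 t)).
  intros i Hi. apply RSint_cont; auto. apply cont01_delayed_comp; auto. Qed.

Lemma delay_step_0 h C : delay_step h C 0 = f 0.
Proof. unfold delay_step. rewrite (rsum_ext d _ (fun _ => 0)). rewrite rsum_zero; ring.
  intros; apply RSint_point. Qed.

Lemma delay_step_ext h C1 C2 t : 0 <= h -> cont01 C1 -> 0 <= t <= 1 ->
  (forall s, 0 <= s <= t -> C1 (Rmax 0 (s - h)) = C2 (Rmax 0 (s - h))) ->
  delay_step h C1 t = delay_step h C2 t.
Proof. intros Hh HC Ht HC12. unfold delay_step. f_equal. apply rsum_ext. intros i Hi.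
  eapply RSint_ext; [lra|apply RSint_delayed; auto|]. intros s Hs. rewrite HC12; auto. Qed.

Lemma tonelli_cont h k : 0 <= h -> cont01 (tonelli h k).
Proof. intros Hh. induction k; simpl.
  - intros t Ht e He. exists 1. split; [lra|]. intros. rewrite Rminus_diag, Rabs_R0; auto.
  - apply delay_step_cont; auto. Qed.

Lemma delay_le s h k : 0 < h -> s <= INR (S k) * h -> Rmax 0 (s - h) <= INR k * h.
Proof. intros Hh Hs. rewrite S_INR in Hs. pose proof (pos_INR k).
  unfold Rmax; destruct Rle_dec; [lra|]. apply Rmult_le_pos; lra. Qed.

Lemma tonelli_stable h k : 0 < h ->
  forall t, 0 <= t <= 1 -> t <= INR k * h -> tonelli h (S k) t = tonelli h k t.
Proof. intros Hh. induction k; intros t Ht Htk.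
  - simpl in Htk. replace t with 0 by lra. apply delay_step_0.
  - change (delay_step h (tonelli h (S k)) t = delay_step h (tonelli h k) t).
    apply delay_step_ext; auto; [lra|apply tonelli_cont; lra|].
    intros s Hs. apply IHk. apply delay_in01; lra. apply delay_le; auto; lra. Qed.

Lemma tonelli_eq h m : 0 < h -> 1 <= INR (S m) * h ->
  forall t, 0 <= t <= 1 -> tonelli h (S m) t = delay_step h (tonelli h (S m)) t.
Proof. intros Hh Hm t Ht. change (delay_step h (tonelli h m) t = delay_step h (tonelli h (S m)) t).
  apply delay_step_ext; auto; [lra|apply tonelli_cont; lra|].
  intros s Hs. symmetry. apply tonelli_stable; auto. apply delay_in01; lra. apply delay_le; auto; lra. Qed.

Lemma delay_dist s h : 0 <= s -> 0 <= h -> Rabs (Rmax 0 (s - h) - s) <= h.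
Proof. intros Hs Hh. unfold Rmax; destruct Rle_dec; rabs. Qed.

Lemma delay_step_dist h C B t eta : 0 <= h -> cont01 C -> cont01 B -> 0 <= t <= 1 -> 0 <= eta ->
  (forall i s, (i < d)%nat -> 0 <= s <= t -> Rabs (g i s (C (Rmax 0 (s - h))) - g i s (B s)) <= eta) ->
  Rabs (delay_step h C t - (f t + rsum d (fun i => RSint (fun s => g i s (B s)) (A i) 0 t))) <= eta * tvar_sum t.
Proof. intros Hh HC HB Ht Heta Hg'.
  assert (Hint : rsum d (fun i => Rabs (RSint (fun s => g i s (C (Rmax 0 (s - h)))) (A i) 0 t -
      RSint (fun s => g i s (B s)) (A i) 0 t)) <= eta * tvar_sum t).
  { apply (rsum_RS_integral_const_le (fun i s => g i s (C (Rmax 0 (s - h))) - g i s (B s))); auto.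
    intros i Hi. apply RS_integral_minus. apply RSint_delayed; auto.
    apply RSint_spec01; auto. apply cont01_comp; auto. }
  pose proof (rsum_abs d (fun i => RSint (fun s => g i s (C (Rmax 0 (s - h)))) (A i) 0 t -
      RSint (fun s => g i s (B s)) (A i) 0 t)) as Habs. rewrite rsum_minus in Habs.
  unfold delay_step. rabs. Qed.

Lemma tonelli_limit_solution (hh : nat -> R) (sigma : nat -> nat) B :
  (forall n, 0 < hh n) -> (forall n, 1 <= INR (S n) * hh n) ->
  (forall e, 0 < e -> exists N, forall n, (N <= n)%nat -> hh n < e) -> increasing sigma ->
  (forall e, 0 < e -> exists dl, 0 < dl /\ forall n s t, 0 <= s <= 1 -> 0 <= t <= 1 -> Rabs (s - t) < dl ->
     Rabs (tonelli (hh n) (S n) s - tonelli (hh n) (S n) t) < e) ->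
  (forall e, 0 < e -> exists N, forall k t, (N <= k)%nat -> 0 <= t <= 1 ->
     Rabs (tonelli (hh (sigma k)) (S (sigma k)) t - B t) < e) ->
  cont01 B -> is_solution d A f g B.
Proof. intros Hh Hh1 Hsmall Hsig Heq Hconv HB t Ht.
  exists (fun i => RSint (fun s => g i s (B s)) (A i) 0 t). split.
  { intros i Hi. apply RSint_spec01; auto. apply cont01_comp; auto. }
  apply Req_of_close. intros e He. pose proof (tvar_sum_nonneg t Ht) as HW.
  set (eta := e / (2 * (tvar_sum t + 1))).
  assert (Heta : 0 < eta) by (apply Rdiv_lt_0_compat; lra).
  assert (HetaW : eta * tvar_sum t <= e / 2)
    by (replace (e / 2) with (eta * (tvar_sum t + 1)) by (unfold eta; field; lra); nra).
  destruct (common_delta d (fun i dl => forall s z, 0 <= s <= 1 -> Rabs (z - B s) < dl ->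
     Rabs (g i s z - g i s (B s)) < eta)) as [eg [Heg Hg']].
  { intros i dl dl' Hdl H s z Hs Hz. apply H; auto. lra. }
  { intros i Hi. apply cont01R_unif_graph; auto. }
  destruct (Heq (eg/2) ltac:(lra)) as [dl [Hdl Hd]].
  destruct (Hconv (Rmin (eg/2) (e/2))) as [N1 HN1]; [apply Rmin_pos; lra|].
  destruct (Hsmall dl Hdl) as [N2 HN2].
  pose proof (increasing_ge sigma Hsig (N1 + N2)). set (n := sigma (N1 + N2)%nat) in *.
  specialize (HN2 n ltac:(lia)). pose proof (Hh n). set (C := tonelli (hh n) (S n)).
  assert (HCB : forall s, 0 <= s <= 1 -> Rabs (C s - B s) < Rmin (eg/2) (e/2))
    by (intros s Hs; apply (HN1 (N1 + N2)%nat); auto; lia).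
  assert (Hdelay : forall s, 0 <= s <= 1 -> Rabs (C (Rmax 0 (s - hh n)) - B s) < eg).
  { intros s Hs. pose proof (delay_dist s (hh n) ltac:(lra) ltac:(lra)).
    pose proof (Hd n _ s (delay_in01 s (hh n) Hs ltac:(lra)) Hs ltac:(lra)) as Hmod.
    pose proof (HCB s Hs). pose proof (Rmin_l (eg/2) (e/2)). fold C in Hmod. rabs. }
  pose proof (delay_step_dist (hh n) C B t eta ltac:(lra) ltac:(apply tonelli_cont; lra) HB Ht ltac:(lra)) as Hres.
  assert (HCt : C t = delay_step (hh n) C t) by (apply tonelli_eq; auto). rewrite <- HCt in Hres.
  pose proof (HCB t Ht). pose proof (Rmin_r (eg/2) (e/2)).
  assert (eta * tvar_sum t <= e / 2) by lra.
  enough (Rabs (C t - (f t + rsum d (fun i => RSint (fun s => g i s (B s)) (A i) 0 t))) <= e / 2) by rabs.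
  apply (Rle_trans _ _ _ (Hres ltac:(intros i s Hi Hs; left; apply Hg'; auto; [lra|apply Hdelay; lra]))).
  lra. Qed.

Section LinearGrowth.

Variable c : R.
Hypothesis Hc : 0 <= c.
Hypothesis Hgr : forall i t x, (i < d)%nat -> 0 <= t <= 1 -> Rabs (g i t x) <= c * (1 + Rabs x).

Definition gronwall_bound (F t : R) := (F + 1) * exp (c * tvar_sum t) - 1.

Lemma gronwall_bound_mono F u v : 0 <= F -> 0 <= u <= v -> v <= 1 -> gronwall_bound F u <= gronwall_bound F v.
Proof. intros HF Huv Hv. unfold gronwall_bound. pose proof (tvar_sum_mono u v Huv Hv).
  assert (exp (c * tvar_sum u) <= exp (c * tvar_sum v)) by (apply exp_le; nra). nra. Qed.

Lemma tonelli_bound h m F : 0 < h -> 1 <= INR (S m) * h -> (forall t, 0 <= t <= 1 -> Rabs (f t) <= F) ->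
  forall t, 0 <= t <= 1 -> Rabs (tonelli h (S m) t) <= gronwall_bound F t.
Proof. intros Hh Hm HF. set (C := tonelli h (S m)).
  assert (HF0 : 0 <= F) by (pose proof (HF 0 ltac:(lra)); pose proof (Rabs_pos (f 0)); lra).
  assert (HC : cont01 C) by (apply tonelli_cont; lra).
  assert (Hk : forall k t, 0 <= t <= 1 -> t <= INR k * h -> Rabs (C t) <= gronwall_bound F t).
  { induction k; intros t Ht Htk.
    - simpl in Htk. replace t with 0 by lra. replace (C 0) with (f 0) by (symmetry; apply delay_step_0).
      unfold gronwall_bound. rewrite tvar_sum_0, Rmult_0_r, exp_0. specialize (HF 0 ltac:(lra)). lra.
    - assert (Hint : rsum d (fun i => Rabs (RSint (fun s => g i s (C (Rmax 0 (s - h)))) (A i) 0 t))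
          <= (F + 1) * (exp (c * tvar_sum t) - 1)).
      { apply (rsum_RS_integral_exp_le (fun i s => g i s (C (Rmax 0 (s - h))))); auto; try lra.
        - intros i Hi. apply RSint_delayed; auto; lra.
        - intros i s Hi Hs. assert (Hmx : 0 <= Rmax 0 (s - h) <= 1) by (apply delay_in01; lra).
          pose proof (IHk _ Hmx (delay_le s h k Hh ltac:(lra))).
          pose proof (delay_dist s h ltac:(lra) ltac:(lra)).
          pose proof (gronwall_bound_mono F (Rmax 0 (s - h)) s HF0 ltac:(unfold Rmax in *; destruct Rle_dec; lra) ltac:(lra)).
          eapply Rle_trans; [apply Hgr; auto; lra|]. unfold gronwall_bound in *. nra. }
      pose proof (rsum_abs d (fun i => RSint (fun s => g i s (C (Rmax 0 (s - h)))) (A i) 0 t)) as Habs.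
      unfold C. rewrite (tonelli_eq h m Hh Hm t Ht). fold C. unfold delay_step.
      specialize (HF t Ht). unfold gronwall_bound. rabs. }
  intros t Ht. apply (Hk (S m)); lra. Qed.

Lemma tonelli_modulus h m M0 : 0 < h -> 1 <= INR (S m) * h ->
  (forall t, 0 <= t <= 1 -> Rabs (tonelli h (S m) t) <= M0) ->
  forall t t', 0 <= t' <= t -> t <= 1 ->
  Rabs (tonelli h (S m) t - tonelli h (S m) t') <= Rabs (f t - f t') + c * (1 + M0) * (tvar_sum t - tvar_sum t').
Proof. intros Hh Hm HM t t' Htt' Ht. set (C := tonelli h (S m)).
  assert (HC : cont01 C) by (apply tonelli_cont; lra).
  unfold C. rewrite (tonelli_eq h m Hh Hm t), (tonelli_eq h m Hh Hm t') by lra. fold C. unfold delay_step.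
  replace (f t + rsum d (fun i => RSint (fun s => g i s (C (Rmax 0 (s - h)))) (A i) 0 t) -
    (f t' + rsum d (fun i => RSint (fun s => g i s (C (Rmax 0 (s - h)))) (A i) 0 t')))
   with ((f t - f t') + rsum d (fun i => RSint (fun s => g i s (C (Rmax 0 (s - h)))) (A i) 0 t -
         RSint (fun s => g i s (C (Rmax 0 (s - h)))) (A i) 0 t')) by (rewrite rsum_minus; ring).
  eapply Rle_trans; [apply Rabs_triang|]. apply Rplus_le_compat_l.
  eapply Rle_trans; [apply rsum_abs|].
  unfold tvar_sum. rewrite <- rsum_minus, <- rsum_scal. apply rsum_le. intros i Hi.
  apply RSint_increment_le; auto; try lra. apply cont01_delayed_comp; auto; lra.
  intros s Hs. eapply Rle_trans; [apply Hgr; auto|]. apply Rmult_le_compat_l; auto.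
  pose proof (HM (Rmax 0 (s - h)) ltac:(apply delay_in01; lra)) as HH. fold C in HH. lra. Qed.

Lemma tonelli_equicont (hh : nat -> R) M0 : (forall n, 0 < hh n) -> (forall n, 1 <= INR (S n) * hh n) ->
  (forall n t, 0 <= t <= 1 -> Rabs (tonelli (hh n) (S n) t) <= M0) ->
  forall e, 0 < e -> exists dl, 0 < dl /\ forall n s t, 0 <= s <= 1 -> 0 <= t <= 1 -> Rabs (s - t) < dl ->
     Rabs (tonelli (hh n) (S n) s - tonelli (hh n) (S n) t) < e.
Proof. intros Hh Hh1 Hub e He.
  assert (HM0 : 0 <= M0) by (pose proof (Hub O 0 ltac:(lra)); pose proof (Rabs_pos (tonelli (hh O) 1 0)); lra).
  set (K := c * (1 + M0)). assert (HK : 0 <= K) by (unfold K; apply Rmult_le_pos; lra).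
  set (q := e / (2 * (K + 1))). assert (Hq : 0 < q) by (apply Rdiv_lt_0_compat; lra).
  assert (HKq : K * q < e / 2) by (replace (e / 2) with (q * (K + 1)) by (unfold q; field; lra); nra).
  destruct (cont01_unif f hf (e/2) ltac:(lra)) as [d1 [Hd1 H1]].
  destruct (cont01_unif _ tvar_sum_cont q Hq) as [d2 [Hd2 H2]].
  exists (Rmin d1 d2). split; [apply Rmin_pos; auto|]. intros n s t Hs Ht Hst.
  pose proof (Rmin_l d1 d2). pose proof (Rmin_r d1 d2).
  specialize (H1 s t Hs Ht ltac:(lra)). specialize (H2 s t Hs Ht ltac:(lra)).
  destruct (Rle_dec t s).
  - pose proof (tonelli_modulus (hh n) n M0 (Hh n) (Hh1 n) (Hub n) s t ltac:(lra) ltac:(lra)) as Hmod.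
    fold K in Hmod.
    assert (K * (tvar_sum s - tvar_sum t) <= K * q) by (apply Rmult_le_compat_l; auto; rabs). rabs.
  - pose proof (tonelli_modulus (hh n) n M0 (Hh n) (Hh1 n) (Hub n) t s ltac:(lra) ltac:(lra)) as Hmod.
    fold K in Hmod.
    assert (K * (tvar_sum t - tvar_sum s) <= K * q) by (apply Rmult_le_compat_l; auto; rabs). rabs. Qed.

Lemma solution_exists : exists B, cont01 B /\ is_solution d A f g B.
Proof. destruct (cont01_bounded f hf) as [F HF].
  assert (HF0 : 0 <= F) by (pose proof (HF 0 ltac:(lra)); pose proof (Rabs_pos (f 0)); lra).
  set (hh n := / INR (S n)).
  assert (Hh : forall n, 0 < hh n) by (intros n; apply Rinv_0_lt_compat, lt_0_INR; lia).
  assert (Hh1 : forall n, 1 <= INR (S n) * hh n) by (intros n; unfold hh; rewrite Rinv_r; [lra|apply not_0_INR; lia]).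
  assert (Hsmall : forall e, 0 < e -> exists N, forall n, (N <= n)%nat -> hh n < e).
  { intros e He. destruct (inv_succ_lt e He) as [N HN]. exists N. intros n Hn. unfold hh. rewrite S_INR. apply HN; auto. }
  assert (Hub : forall n t, 0 <= t <= 1 -> Rabs (tonelli (hh n) (S n) t) <= gronwall_bound F 1).
  { intros n t Ht. eapply Rle_trans; [apply tonelli_bound; auto|]. apply gronwall_bound_mono; auto; lra. }
  pose proof (tonelli_equicont hh _ Hh Hh1 Hub) as Heq.
  destruct (arzela_ascoli (fun n => tonelli (hh n) (S n)) _ Hub Heq) as [sigma [B [Hsig Hconv]]].
  assert (HB : cont01 B).
  { apply (unif_limit_cont (fun k => tonelli (hh (sigma k)) (S (sigma k)))); auto.
    intros k. apply tonelli_cont. left; apply Hh. }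
  exists B. split; auto. apply (tonelli_limit_solution hh sigma); auto. Qed.

End LinearGrowth.

Lemma solution_RSint B : is_solution d A f g B -> forall t, 0 <= t <= 1 ->
  (forall i, (i < d)%nat -> is_RS_integral (fun s => g i s (B s)) (A i) 0 t (RSint (fun s => g i s (B s)) (A i) 0 t)) /\
  B t = f t + rsum d (fun i => RSint (fun s => g i s (B s)) (A i) 0 t).
Proof. intros Hs t Ht. destruct (Hs t Ht) as [I [HI HB]]. split.
  - intros i Hi. eapply RSint_spec; eauto.
  - rewrite HB. f_equal. apply rsum_ext. intros i Hi. symmetry. apply RSint_eq; auto; lra. Qed.

Lemma solutions_picard_bound B1 B2 L m : is_solution d A f g B1 -> is_solution d A f g B2 -> 0 <= L ->
  (forall i t, (i < d)%nat -> 0 <= t <= 1 -> Rabs (g i t (B1 t) - g i t (B2 t)) <= L * Rabs (B1 t - B2 t)) ->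
  (forall t, 0 <= t <= 1 -> Rabs (B1 t - B2 t) <= m) ->
  forall j t, 0 <= t <= 1 -> Rabs (B1 t - B2 t) <= m * L ^ j / INR (Factorial.fact j) * tvar_sum t ^ j.
Proof. intros Hs1 Hs2 HL Hlip Hm.
  assert (Hm0 : 0 <= m) by (pose proof (Hm 0 ltac:(lra)); pose proof (Rabs_pos (B1 0 - B2 0)); lra).
  induction j; intros t Ht.
  - simpl. replace (m * 1 / 1 * 1) with m by field. auto.
  - destruct (solution_RSint B1 Hs1 t Ht) as [HI1 E1]. destruct (solution_RSint B2 Hs2 t Ht) as [HI2 E2].
    assert (Hfj := INR_fact_neq_0 j). assert (Hfj0 : 0 < INR (Factorial.fact j)) by (apply lt_0_INR, Factorial.lt_O_fact).
    set (K := L * (m * L ^ j / INR (Factorial.fact j))).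
    assert (Hint : rsum d (fun i => Rabs (RSint (fun s => g i s (B1 s)) (A i) 0 t - RSint (fun s => g i s (B2 s)) (A i) 0 t))
        <= K * tvar_sum t ^ S j / INR (S j)).
    { apply (rsum_RS_integral_pow_le (fun i s => g i s (B1 s) - g i s (B2 s))); auto.
      - intros i Hi. apply RS_integral_minus; auto.
      - intros i s Hi Hs. eapply Rle_trans; [apply Hlip; auto; lra|].
        unfold K. rewrite Rmult_assoc. apply Rmult_le_compat_l; auto. apply IHj; lra.
      - unfold K. apply Rmult_le_pos; auto. apply Rle_mult_inv_pos; auto.
        apply Rmult_le_pos; auto. apply pow_le; auto. }
    pose proof (rsum_abs d (fun i => RSint (fun s => g i s (B1 s)) (A i) 0 t - RSint (fun s => g i s (B2 s)) (A i) 0 t)) as Habs.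
    rewrite rsum_minus in Habs.
    replace (m * L ^ S j / INR (Factorial.fact (S j)) * tvar_sum t ^ S j) with (K * tvar_sum t ^ S j / INR (S j)).
    2: { unfold K. change (Factorial.fact (S j)) with (S j * Factorial.fact j)%nat. rewrite mult_INR.
         simpl (L ^ S j). field. split; auto. apply not_0_INR; lia. }
    rewrite E1, E2. rabs. Qed.

Lemma solution_unique B1 B2 :
  (forall p, 0 < p -> exists L, 0 <= L /\ forall i t x z, (i < d)%nat ->
       0 <= t <= 1 -> -p <= x <= p -> -p <= z <= p ->
       Rabs (g i t x - g i t z) <= L * Rabs (x - z)) ->
  cont01 B1 -> is_solution d A f g B1 -> cont01 B2 -> is_solution d A f g B2 ->
  forall t, 0 <= t <= 1 -> B1 t = B2 t.
Proof. intros Hlip HB1 Hs1 HB2 Hs2.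
  destruct (cont01_bounded B1 HB1) as [M1 HM1]. destruct (cont01_bounded B2 HB2) as [M2 HM2].
  assert (HM10 : 0 <= M1) by (pose proof (HM1 0 ltac:(lra)); pose proof (Rabs_pos (B1 0)); lra).
  assert (HM20 : 0 <= M2) by (pose proof (HM2 0 ltac:(lra)); pose proof (Rabs_pos (B2 0)); lra).
  destruct (Hlip (M1 + M2 + 1) ltac:(lra)) as [L [HL HLip]].
  assert (Hj := solutions_picard_bound B1 B2 L (M1 + M2) Hs1 Hs2 HL).
  intros t Ht. apply Req_of_close. intros e He.
  destruct (cv_speed_pow_fact (L * tvar_sum t) (e / (M1 + M2 + 1))) as [N HN]; [apply Rdiv_lt_0_compat; lra|].
  specialize (HN N (le_n N)). unfold R_dist in HN. rewrite Rminus_0_r, Rpow_mult_distr in HN.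
  set (q := L ^ N * tvar_sum t ^ N / INR (Factorial.fact N)) in HN.
  assert (Hq : Rabs (B1 t - B2 t) <= (M1 + M2) * q).
  { replace ((M1 + M2) * q) with ((M1 + M2) * L ^ N / INR (Factorial.fact N) * tvar_sum t ^ N)
      by (unfold q; field; apply INR_fact_neq_0).
    apply Hj; auto.
    - intros i s Hi Hs. specialize (HM1 s Hs). specialize (HM2 s Hs). apply HLip; auto; rabs.
    - intros s Hs. specialize (HM1 s Hs). specialize (HM2 s Hs). rabs. }
  pose proof (RRle_abs q).
  assert ((M1 + M2) * q <= (M1 + M2) * (e / (M1 + M2 + 1))) by (apply Rmult_le_compat_l; lra).
  assert ((M1 + M2) * (e / (M1 + M2 + 1)) <= e).
  { replace e with (e / (M1 + M2 + 1) * (M1 + M2 + 1)) at 2 by (field; lra).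
    pose proof (Rdiv_lt_0_compat e (M1 + M2 + 1) He ltac:(lra)). nra. }
  lra. Qed.

End IntegralEquation.

Theorem proposition3p3 (d : nat) (A : nat -> R -> R) (f : R -> R)
  (g : nat -> R -> R -> R)
  (hA_cont : forall i, (i < d)%nat -> cont01 (A i))
  (hA_bv : forall i, (i < d)%nat -> bounded_variation01 (A i))
  (hf : cont01 f)
  (hg_cont : forall i, (i < d)%nat -> cont01R (g i))
  (hg_growth : exists c, 0 <= c /\ forall i t x, (i < d)%nat -> 0 <= t <= 1 ->
      Rabs (g i t x) <= c * (1 + Rabs x)) :
  (exists B, cont01 B /\ is_solution d A f g B) /\
  ((forall p, 0 < p -> exists L, 0 <= L /\ forall i t x z, (i < d)%nat ->
       0 <= t <= 1 -> -p <= x <= p -> -p <= z <= p ->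
       Rabs (g i t x - g i t z) <= L * Rabs (x - z)) ->
   forall B1 B2, cont01 B1 -> is_solution d A f g B1 ->
     cont01 B2 -> is_solution d A f g B2 ->
     forall t, 0 <= t <= 1 -> B1 t = B2 t).
Proof.
  split.
  - destruct hg_growth as [c [Hc Hgr]]. eapply solution_exists; eauto.
  - intros Hlip B1 B2 HB1 Hs1 HB2 Hs2. eapply solution_unique; eauto.
Qed.
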